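(* The peer subcontract preorder $\sqsubseteq$ equals $\nu X.\mathcal S(X,X)$, the greatest fixed point of the map $X\mapsto\mathcal S(X,X)$ on the powerset of $\mathcal{SC}\times\mathcal{SC}$.
   Context: Fix base types $BT$ with preorder $\leq_{\mathsf b}$ and labels $\mathcal L$. Contract terms: $\sigma::=\mathbf 1\mid ?\mathtt t.\sigma\mid !\mathtt t.\sigma\mid !(\sigma).\sigma\mid ?(\sigma).\sigma\mid \sum_{i\in I}?l_i.\sigma_i\mid \bigoplus_{i\in I}!l_i.\sigma_i\mid \mu x.\sigma\mid x$ ($I$ finite nonempty, labels distinct). $\mathcal{SC}$ = closed guarded terms. $\mathrm{unfold}(\mu x.\sigma')=\mathrm{unfold}(\sigma'[\mu x.\sigma'/x])$, otherwise identity. LTS: $\mathbf 1\xrightarrow\checkmark$; $\lambda.\sigma\xrightarrow\lambda\sigma$ for prefixes (including $!l.\sigma$); $\bigoplus_{i\in I}!l_i.\sigma_i\xrightarrow\tau!l_i.\sigma_i$ for $|I|>1$; $\sum ?l_i.\sigma_i\xrightarrow{?l_i}\sigma_i$; $\mu x.\sigma\xrightarrow\tau\sigma[\mu x.\sigma/x]$. $\lambda_1\bowtie_B\lambda_2$ iff the pair is $(!l,?l)$, $(?l,!l)$, $(!\mathtt t_1,?\mathtt t_2)$ with $\mathtt t_1\leq_{\mathsf b}\mathtt t_2$, $(?\mathtt t_1,!\mathtt t_2)$ with $\mathtt t_2\leq_{\mathsf b}\mathtt t_1$, $(!(\sigma_1),?(\sigma_2))$ with $\sigma_1B\sigma_2$,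 $(?(\sigma_1),!(\sigma_2))$ with $\sigma_2B\sigma_1$. $\rho\|\sigma\xrightarrow\tau_B$ by a $\tau$ of either side or by synchronisation on $\lambda_1\bowtie_B\lambda_2$. $\dashv_B$: greatest $R$ with $\rho R\sigma$ implying (i) if $\rho\|\sigma$ has no $\xrightarrow\tau_B$ move then $\rho\xrightarrow\checkmark$, $\sigma\xrightarrow\checkmark$; (ii) every $\rho\|\sigma\xrightarrow\tau_B\rho'\|\sigma'$ has $\rho'R\sigma'$. $\sigma_1\sqsubseteq_B\sigma_2$ iff $\forall\rho$, $\rho\dashv_B\sigma_1\Rightarrow\rho\dashv_B\sigma_2$. $\sqsubseteq$ is the greatest fixed point of the monotone map $B\mapsto\sqsubseteq_B$ on preorders over $\mathcal{SC}$. For $R,B\subseteq\mathcal{SC}^2$, $\mathcal S(R,B)$ is the set of $(\sigma_1,\sigma_2)$ such that, depending on $\mathrm{unfold}(\sigma_1)$: $\mathbf 1$ forces $\mathrm{unfold}(\sigma_2)=\mathbf 1$; $?\mathtt t_1.\sigma_1'$ forces $\mathrm{unfold}(\sigma_2)=?\mathtt t_2.\sigma_2'$ with $\sigma_1'R\sigma_2'$, $\mathtt t_1\leq_{\mathsf b}\mathtt t_2$; $!\mathtt t_1.\sigma_1'$ forces $!\mathtt t_2.\sigma_2'$ with $\sigma_1'R\sigma_2'$, $\mathtt t_2\leq_{\mathsf b}\mathtt t_1$; $!(\sigma^m_1).\sigma_1'$ forces $!(\sigma^m_2).\sigma_2'$ with $\sigma_1'R\sigma_2'$, $\sigma^m_2B\sigma^m_1$;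 $?(\sigma^m_1).\sigma_1'$ forces $?(\sigma^m_2).\sigma_2'$ with $\sigma_1'R\sigma_2'$, $\sigma^m_1B\sigma^m_2$; $\sum_{i\in I}?l_i.\sigma^1_i$ forces $\sum_{j\in J}?l_j.\sigma^2_j$ with $I\subseteq J$, $\sigma^1_iR\sigma^2_i$; $\bigoplus_{i\in I}!l_i.\sigma^1_i$ forces $\bigoplus_{j\in J}!l_j.\sigma^2_j$ with $J\subseteq I$, $\sigma^1_jR\sigma^2_j$. *)

From Stdlib Require Import List Classes.RelationClasses.
Import ListNotations.

Section Contracts.
Variables (BT L : Type).

(* OutS m s = !(m).s ,  InS m s = ?(m).s ;
   Ext bs = sum_{i} ?l_i.s_i ,  Int bs = (+)_{i} !l_i.s_i
   (a singleton Int [(l,s)] is the prefix !l.s). *)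
Inductive term : Type :=
| One : term
| InT : BT -> term -> term
| OutT : BT -> term -> term
| OutS : term -> term -> term
| InS : term -> term -> term
| Ext : list (L * term) -> term
| Int : list (L * term) -> term
| Mu : nat -> term -> term
| Var : nat -> term.

(* capture-free substitution s[r/x] (r will always be closed) *)
Fixpoint subst (s : term) (x : nat) (r : term) : term :=
  match s with
  | One => One
  | InT t s' => InT t (subst s' x r)
  | OutT t s' => OutT t (subst s' x r)
  | OutS m s' => OutS (subst m x r) (subst s' x r)
  | InS m s' => InS (subst m x r) (subst s' x r)
  | Ext bs => Ext ((fix go bs := match bs with
                               | [] => []
                               | (l, t) :: bs' => (l, subst t x r) :: go bs'
                               end) bs)
  | Int bs => Int ((fix go bs := match bs with
                               | [] => []
                               | (l, t) :: bs' => (l, subst t x r) :: go bs'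
                               end) bs)
  | Mu y s' => if Nat.eqb x y then Mu y s' else Mu y (subst s' x r)
  | Var y => if Nat.eqb x y then r else Var y
  end.

Fixpoint free_in (x : nat) (s : term) : Prop :=
  match s with
  | One => False
  | InT _ s' | OutT _ s' => free_in x s'
  | OutS m s' | InS m s' => free_in x m \/ free_in x s'
  | Ext bs | Int bs => (fix go bs := match bs with
                                     | [] => False
                                     | (_, t) :: bs' => free_in x t \/ go bs'
                                     end) bs
  | Mu y s' => x <> y /\ free_in x s'
  | Var y => x = y
  end.

Definition closed (s : term) : Prop := forall x, ~ free_in x s.

Fixpoint unguarded (x : nat) (s : term) : Prop :=
  match s with
  | Var y => x = y
  | Mu y s' => x <> y /\ unguarded x s'
  | _ => False
  end.

Fixpoint guarded (s : term) : Prop :=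
  match s with
  | One | Var _ => True
  | InT _ s' | OutT _ s' => guarded s'
  | OutS m s' | InS m s' => guarded m /\ guarded s'
  | Ext bs | Int bs => (fix go bs := match bs with
                                     | [] => True
                                     | (_, t) :: bs' => guarded t /\ go bs'
                                     end) bs
  | Mu x s' => ~ unguarded x s' /\ guarded s'
  end.

Fixpoint wf (s : term) : Prop :=
  match s with
  | One | Var _ => True
  | InT _ s' | OutT _ s' => wf s'
  | OutS m s' | InS m s' => wf m /\ wf s'
  | Ext bs | Int bs => bs <> [] /\ NoDup (map fst bs) /\
      (fix go bs := match bs with
                    | [] => True
                    | (_, t) :: bs' => wf t /\ go bs'
                    end) bs
  | Mu _ s' => wf s'
  end.

Definition SC (s : term) : Prop := closed s /\ guarded s /\ wf s.

Inductive unfolds : term -> term -> Prop :=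
| unf_mu : forall x s u, unfolds (subst s x (Mu x s)) u -> unfolds (Mu x s) u
| unf_other : forall s, (forall x s', s <> Mu x s') -> unfolds s s.

Inductive action : Type :=
| ATick | ATau
| AInT : BT -> action | AOutT : BT -> action
| AOutS : term -> action | AInS : term -> action
| AInL : L -> action | AOutL : L -> action.

(* LTS; the target of the tick transition is irrelevant (taken to be 1) *)
Inductive step : term -> action -> term -> Prop :=
| st_tick : step One ATick One
| st_inT : forall t s, step (InT t s) (AInT t) s
| st_outT : forall t s, step (OutT t s) (AOutT t) s
| st_outS : forall m s, step (OutS m s) (AOutS m) s
| st_inS : forall m s, step (InS m s) (AInS m) s
| st_outL : forall l s, step (Int [(l, s)]) (AOutL l) s
| st_int : forall bs l s, 1 < length bs -> In (l, s) bs ->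
    step (Int bs) ATau (Int [(l, s)])
| st_ext : forall bs l s, In (l, s) bs -> step (Ext bs) (AInL l) s
| st_mu : forall x s, step (Mu x s) ATau (subst s x (Mu x s)).

Variable leb : BT -> BT -> Prop.

Definition dual (B : term -> term -> Prop) (a1 a2 : action) : Prop :=
  match a1, a2 with
  | AOutL l1, AInL l2 => l1 = l2
  | AInL l1, AOutL l2 => l1 = l2
  | AOutT t1, AInT t2 => leb t1 t2
  | AInT t1, AOutT t2 => leb t2 t1
  | AOutS s1, AInS s2 => B s1 s2
  | AInS s1, AOutS s2 => B s2 s1
  | _, _ => False
  end.

Inductive par_tau (B : term -> term -> Prop) :
    term -> term -> term -> term -> Prop :=
| pt_left : forall r r' s, step r ATau r' -> par_tau B r s r' s
| pt_right : forall r s s', step s ATau s' -> par_tau B r s r s'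
| pt_sync : forall r r' s s' a1 a2,
    step r a1 r' -> step s a2 s' -> dual B a1 a2 -> par_tau B r s r' s'.

Definition compliance_post (B R : term -> term -> Prop) : Prop :=
  forall r s, R r s ->
    ((forall r' s', ~ par_tau B r s r' s') ->
        (exists r', step r ATick r') /\ (exists s', step s ATick s')) /\
    (forall r' s', par_tau B r s r' s' -> R r' s').

Definition complies (B : term -> term -> Prop) (r s : term) : Prop :=
  exists R, compliance_post B R /\ R r s.

Definition subB (B : term -> term -> Prop) (s1 s2 : term) : Prop :=
  SC s1 /\ SC s2 /\
  forall r, SC r -> complies B r s1 -> complies B r s2.

Definition preorder_on_SC (B : term -> term -> Prop) : Prop :=
  (forall x y, B x y -> SC x /\ SC y) /\
  (forall x, SC x -> B x x) /\
  (forall x y z, B x y -> B y z -> B x z).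

(* peer subcontract: greatest fixed point of B |-> [=_B on preorders over SC,
   i.e. (Knaster-Tarski) the union of all post-fixed preorders *)
Definition peer_sub (s1 s2 : term) : Prop :=
  exists B, preorder_on_SC B /\ (forall x y, B x y -> subB B x y) /\ B s1 s2.

Definition Sfun (R B : term -> term -> Prop) (s1 s2 : term) : Prop :=
  forall u1, unfolds s1 u1 ->
  match u1 with
  | One => unfolds s2 One
  | InT t1 s1' => exists t2 s2', unfolds s2 (InT t2 s2') /\ R s1' s2' /\ leb t1 t2
  | OutT t1 s1' => exists t2 s2', unfolds s2 (OutT t2 s2') /\ R s1' s2' /\ leb t2 t1
  | OutS m1 s1' => exists m2 s2', unfolds s2 (OutS m2 s2') /\ R s1' s2' /\ B m2 m1
  | InS m1 s1' => exists m2 s2', unfolds s2 (InS m2 s2') /\ R s1' s2' /\ B m1 m2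
  | Ext bs1 => exists bs2, unfolds s2 (Ext bs2) /\
      forall l s1', In (l, s1') bs1 -> exists s2', In (l, s2') bs2 /\ R s1' s2'
  | Int bs1 => exists bs2, unfolds s2 (Int bs2) /\
      forall l s2', In (l, s2') bs2 -> exists s1', In (l, s1') bs1 /\ R s1' s2'
  | Mu _ _ | Var _ => False
  end.

(* nu X. S(X,X) on the powerset of SC x SC: union of all post-fixed X *)
Definition nuS (s1 s2 : term) : Prop :=
  exists X : term -> term -> Prop,
    (forall x y, X x y -> SC x /\ SC y /\ Sfun X X x y) /\ X s1 s2.

End Contracts.

Arguments One {BT L}.
Arguments InT {BT L}.
Arguments OutT {BT L}.
Arguments OutS {BT L}.
Arguments InS {BT L}.
Arguments Ext {BT L}.
Arguments Int {BT L}.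
Arguments Mu {BT L}.
Arguments Var {BT L}.
Arguments peer_sub {BT L} leb s1 s2.
Arguments nuS {BT L} leb s1 s2.

From Stdlib Require Import List Classes.RelationClasses Classical Lia PeanoNat.
Import ListNotations.

(* Soundness.  νX.S(X,X) is a preorder on SC and refines compliance: if ρ
   complies with the unfolding u of σ1 and the S-clause of u relates σ1 to σ2,
   then the synchronisations of ρ with σ2 and with u correspond, the exchanged
   data being compared by transitivity of ≤ and of νS, and the continuations
   are again in this situation.  Hence νS is a post-fixed preorder of
   B ↦ ⊑_B, so it is contained in ⊑.

   Completeness.  The pairs related by ⊑_B for a post-fixed preorder B form a
   post-fixed point of X ↦ S(X,X).  Each clause of S is extracted with a test
   client of σ1: the dual of the head action of σ1 followed by a client of its
   continuation.  It complies with σ1, hence with σ2, which forces the unfolding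
   of σ2 to have the matching head, with data related by ≤ or B; letting the
   continuation's client range over all compliant clients relates the
   continuations by ⊑_B.  Every closed guarded contract has a compliant client,
   its syntactic dual, which is checked by coinduction up to unfolding. *)

Section PeerSubcontract.
Variables (BT L : Type) (leb : BT -> BT -> Prop).
Local Notation term := (term BT L).
Local Notation subst := (@subst BT L).
Local Notation free_in := (@free_in BT L).
Local Notation closed := (@closed BT L).
Local Notation unguarded := (@unguarded BT L).
Local Notation guarded := (@guarded BT L).
Local Notation wf := (@wf BT L).
Local Notation SC := (@SC BT L).
Local Notation unfolds := (@unfolds BT L).
Local Notation step := (@step BT L).
Local Notation ATick := (@ATick BT L).
Local Notation ATau := (@ATau BT L).
Local Notation AInL := (@AInL BT L).

Section TermInd.
Variable P : term -> Prop.
Hypotheses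
  (P_One : P One)
  (P_InT : forall t s, P s -> P (InT t s))
  (P_OutT : forall t s, P s -> P (OutT t s))
  (P_OutS : forall m s, P m -> P s -> P (OutS m s))
  (P_InS : forall m s, P m -> P s -> P (InS m s))
  (P_Ext : forall bs, (forall l t, In (l, t) bs -> P t) -> P (Ext bs))
  (P_Int : forall bs, (forall l t, In (l, t) bs -> P t) -> P (Int bs))
  (P_Mu : forall x s, P s -> P (Mu x s))
  (P_Var : forall x, P (Var x)).

Fixpoint term_nested_ind (s : term) : P s :=
  let fix branches (bs : list (L * term)) : forall l t, In (l, t) bs -> P t :=
    match bs with
    | [] => fun l t H => False_ind _ H
    | (l0, t0) :: bs' => fun l t H =>
        match H with
        | or_introl E => eq_ind (l0, t0) (fun q => P (snd q)) (term_nested_ind t0) (l, t) E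
        | or_intror H' => branches bs' l t H'
        end
    end in
  match s with
  | One => P_One
  | InT t s => P_InT t s (term_nested_ind s)
  | OutT t s => P_OutT t s (term_nested_ind s)
  | OutS m s => P_OutS m s (term_nested_ind m) (term_nested_ind s)
  | InS m s => P_InS m s (term_nested_ind m) (term_nested_ind s)
  | Ext bs => P_Ext bs (branches bs)
  | Int bs => P_Int bs (branches bs)
  | Mu x s => P_Mu x s (term_nested_ind s)
  | Var x => P_Var x
  end.
End TermInd.

Definition map_branches (f : term -> term) (bs : list (L * term)) : list (L * term) :=
  map (fun p => (fst p, f (snd p))) bs.

Lemma in_map_branches f bs l t :
  In (l, t) (map_branches f bs) <-> exists t0, In (l, t0) bs /\ t = f t0.
Proof.
  unfold map_branches. rewrite in_map_iff. split.
  - intros ([l0 t0] & E & H). injection E as <- <-. eauto.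
  - intros (t0 & H & ->). exists (l, t0); auto.
Qed.

Lemma map_fst_map_branches f bs : map fst (map_branches f bs) = map fst bs.
Proof. unfold map_branches. rewrite map_map. reflexivity. Qed.

Lemma map_branches_nil f bs : map_branches f bs <> [] <-> bs <> [].
Proof. destruct bs; simpl; split; congruence. Qed.

Lemma map_branches_ext_in f g bs :
  (forall l t, In (l, t) bs -> f t = g t) -> map_branches f bs = map_branches g bs.
Proof.
  intros H. apply map_ext_in. intros [l t] Hin. simpl. f_equal. eauto.
Qed.

Lemma map_branches_id bs : map_branches (fun t => t) bs = bs.
Proof. unfold map_branches. rewrite <- map_id. apply map_ext. intros []; reflexivity. Qed.

Lemma map_branches_comp f g bs :
  map_branches f (map_branches g bs) = map_branches (fun t => f (g t)) bs.
Proof. unfold map_branches. rewrite map_map. reflexivity. Qed.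

Lemma NoDup_fst_In_eq (bs : list (L * term)) l a b :
  NoDup (map fst bs) -> In (l, a) bs -> In (l, b) bs -> a = b.
Proof.
  induction bs as [|[l0 t0] bs IH]; simpl; [tauto|].
  intros ND Ha Hb. inversion ND as [|? ? Hn ND']; subst.
  destruct Ha as [Ea|Ha], Hb as [Eb|Hb].
  - congruence.
  - injection Ea as -> ->. exfalso; apply Hn, in_map_iff. exists (l, b); auto.
  - injection Eb as -> ->. exfalso; apply Hn, in_map_iff. exists (l, a); auto.
  - eauto.
Qed.

Lemma subst_Ext bs x r : subst (Ext bs) x r = Ext (map_branches (fun t => subst t x r) bs).
Proof. simpl. f_equal. induction bs as [|[l t] bs IH]; simpl; congruence. Qed.

Lemma subst_Int bs x r : subst (Int bs) x r = Int (map_branches (fun t => subst t x r) bs).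
Proof. simpl. f_equal. induction bs as [|[l t] bs IH]; simpl; congruence. Qed.

(* [free_in], [guarded] and [wf] treat [Ext] and [Int] by one shared clause, so
   each [Int] lemma below is its [Ext] twin up to conversion. *)
Lemma free_in_Ext x bs : free_in x (Ext bs) <-> exists l t, In (l, t) bs /\ free_in x t.
Proof.
  simpl. induction bs as [|[l t] bs IH]; simpl; [firstorder|]. rewrite IH. split.
  - intros [H | (l1 & t1 & H & H')]; eauto 6.
  - intros (l1 & t1 & [E | H] & H'); [injection E as <- <-|]; eauto 6.
Qed.

Lemma free_in_Int x bs : free_in x (Int bs) <-> exists l t, In (l, t) bs /\ free_in x t.
Proof. exact (free_in_Ext x bs). Qed.

Lemma guarded_Ext bs : guarded (Ext bs) <-> forall l t, In (l, t) bs -> guarded t.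
Proof.
  simpl. induction bs as [|[l t] bs IH]; simpl; [firstorder|]. rewrite IH. split.
  - intros [H H'] l1 t1 [E | Hin]; [injection E as <- <-|]; eauto.
  - intros H. split; eauto.
Qed.

Lemma guarded_Int bs : guarded (Int bs) <-> forall l t, In (l, t) bs -> guarded t.
Proof. exact (guarded_Ext bs). Qed.

Lemma wf_Ext bs :
  wf (Ext bs) <-> bs <> [] /\ NoDup (map fst bs) /\ forall l t, In (l, t) bs -> wf t.
Proof.
  simpl. apply and_iff_compat_l, and_iff_compat_l.
  induction bs as [|[l t] bs IH]; simpl; [firstorder|]. rewrite IH. split.
  - intros [H H'] l1 t1 [E | Hin]; [injection E as <- <-|]; eauto.
  - intros H. split; eauto.
Qed.

Lemma wf_Int bs :
  wf (Int bs) <-> bs <> [] /\ NoDup (map fst bs) /\ forall l t, In (l, t) bs -> wf t.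
Proof. exact (wf_Ext bs). Qed.

Lemma unguarded_free x s : unguarded x s -> free_in x s.
Proof. revert x. induction s using term_nested_ind; simpl; firstorder. Qed.

(** * Simultaneous substitution *)

Definition update (e : nat -> term) (x : nat) (v : term) : nat -> term :=
  fun y => if Nat.eqb x y then v else e y.

Lemma update_eq e x v : update e x v x = v.
Proof. unfold update. now rewrite Nat.eqb_refl. Qed.

Lemma update_neq e x v y : x <> y -> update e x v y = e y.
Proof. unfold update. intros H. apply Nat.eqb_neq in H. now rewrite H. Qed.

Fixpoint psubst (e : nat -> term) (s : term) : term :=
  match s with
  | One => One
  | InT t s => InT t (psubst e s)
  | OutT t s => OutT t (psubst e s)
  | OutS m s => OutS (psubst e m) (psubst e s)
  | InS m s => InS (psubst e m) (psubst e s)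
  | Ext bs => Ext (map_branches (psubst e) bs)
  | Int bs => Int (map_branches (psubst e) bs)
  | Mu y s => Mu y (psubst (update e y (Var y)) s)
  | Var y => e y
  end.

Lemma psubst_ext s : forall e e', (forall x, free_in x s -> e x = e' x) ->
  psubst e s = psubst e' s.
Proof.
  induction s using term_nested_ind; intros e e' HE; simpl in *; f_equal; auto.
  - apply map_branches_ext_in. intros l t Hin. apply (H l t Hin).
    intros x Hx. apply HE, free_in_Ext. eauto.
  - apply map_branches_ext_in. intros l t Hin. apply (H l t Hin).
    intros x Hx. apply HE, free_in_Int. eauto.
  - apply IHs. intros y Hy. unfold update. destruct (Nat.eqb_spec x y); auto.
Qed.

Lemma psubst_Var s : psubst (fun x => Var x) s = s.
Proof.
  induction s using term_nested_ind; simpl; f_equal; auto;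
    try (rewrite <- (map_branches_id bs) at 2; apply map_branches_ext_in; eauto).
  rewrite <- IHs at 2. apply psubst_ext. intros y _. unfold update.
  destruct (Nat.eqb_spec x y); subst; auto.
Qed.

Lemma subst_psubst s : forall x N, subst s x N = psubst (update (fun z => Var z) x N) s.
Proof.
  induction s using term_nested_ind; intros y N;
    try (simpl; f_equal; auto; fail).
  - rewrite subst_Ext. simpl. f_equal. apply map_branches_ext_in. eauto.
  - rewrite subst_Int. simpl. f_equal. apply map_branches_ext_in. eauto.
  - simpl. destruct (Nat.eqb_spec y x) as [<- | Hyx]; f_equal.
    + rewrite <- (psubst_Var s) at 1. apply psubst_ext. intros z _.
      unfold update. destruct (Nat.eqb_spec y z); auto.
    + rewrite IHs. apply psubst_ext. intros z _. unfold update.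
      destruct (Nat.eqb_spec x z), (Nat.eqb_spec y z); subst; congruence.
Qed.

Lemma free_in_psubst s : forall e z, free_in z (psubst e s) ->
  exists w, free_in w s /\ free_in z (e w).
Proof.
  induction s using term_nested_ind; intros e z Hz; cbn [psubst] in Hz.
  - contradiction.
  - simpl in *; eauto.
  - simpl in *; eauto.
  - destruct Hz as [Hz | Hz]; [destruct (IHs1 e z Hz) | destruct (IHs2 e z Hz)]; firstorder.
  - destruct Hz as [Hz | Hz]; [destruct (IHs1 e z Hz) | destruct (IHs2 e z Hz)]; firstorder.
  - apply free_in_Ext in Hz. destruct Hz as (l & t & Hin & Hf).
    apply in_map_branches in Hin. destruct Hin as (t0 & Hin & ->).
    destruct (H l t0 Hin e z Hf) as (w & ? & ?). exists w. rewrite free_in_Ext. eauto.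
  - apply free_in_Int in Hz. destruct Hz as (l & t & Hin & Hf).
    apply in_map_branches in Hin. destruct Hin as (t0 & Hin & ->).
    destruct (H l t0 Hin e z Hf) as (w & ? & ?). exists w. rewrite free_in_Int. eauto.
  - destruct Hz as [Hne Hz]. destruct (IHs _ _ Hz) as (w & Hw & Hz').
    unfold update in Hz'. destruct (Nat.eqb_spec x w) as [<- | ]; simpl in Hz'; [congruence|].
    exists w. simpl. auto.
  - simpl; eauto.
Qed.

Lemma closed_psubst t e : (forall w, free_in w t -> closed (e w)) -> closed (psubst e t).
Proof.
  intros H z Hz. apply free_in_psubst in Hz. destruct Hz as (w & Hw & Hz). eapply H; eauto.
Qed.

Lemma psubst_closed s e : closed s -> psubst e s = s.
Proof.
  intros C. rewrite <- (psubst_Var s) at 2. apply psubst_ext.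
  intros x Hx. exfalso; eapply C; eauto.
Qed.

Lemma subst_closed s x N : closed s -> subst s x N = s.
Proof. intros C. rewrite subst_psubst. now apply psubst_closed. Qed.

Lemma unguarded_psubst s : forall e z, unguarded z (psubst e s) ->
  exists w, unguarded w s /\ unguarded z (e w).
Proof.
  induction s using term_nested_ind; intros e z Hz; simpl in *; try tauto.
  - destruct Hz as [Hne Hz]. destruct (IHs _ _ Hz) as (w & Hw & Hz').
    unfold update in Hz'. destruct (Nat.eqb_spec x w) as [<- | ]; simpl in Hz'; [congruence|eauto].
  - eauto.
Qed.

(* Substituted terms must be closed or variables: a closed term cannot make a
   bound variable unguarded. *)
Lemma guarded_psubst s : forall e, guarded s ->
  (forall w, free_in w s -> guarded (e w) /\ (e w = Var w \/ closed (e w))) ->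
  guarded (psubst e s).
Proof.
  induction s using term_nested_ind; intros e Hg He; cbn [psubst];
    try (simpl in *; auto; fail).
  - destruct Hg; split; [apply IHs1 | apply IHs2]; simpl in *; auto.
  - destruct Hg; split; [apply IHs1 | apply IHs2]; simpl in *; auto.
  - apply guarded_Ext. intros l t Hin. apply in_map_branches in Hin.
    destruct Hin as (t0 & Hin & ->). rewrite guarded_Ext in Hg.
    apply H with l; eauto. intros w Hw. apply He, free_in_Ext. eauto.
  - apply guarded_Int. intros l t Hin. apply in_map_branches in Hin.
    destruct Hin as (t0 & Hin & ->). rewrite guarded_Int in Hg.
    apply H with l; eauto. intros w Hw. apply He, free_in_Int. eauto.
  - simpl in *. destruct Hg as [Hng Hg]. split.
    + intros Hu. destruct (unguarded_psubst _ _ _ Hu) as (w & Hw & Hz).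
      unfold update in Hz. destruct (Nat.eqb_spec x w) as [<- | Hxw]; [auto|].
      destruct (He w) as [_ [E | C]].
      * split; auto. now apply unguarded_free.
      * rewrite E in Hz. simpl in Hz. congruence.
      * apply (C x). now apply unguarded_free.
    + apply IHs; auto. intros w Hw. unfold update.
      destruct (Nat.eqb_spec x w) as [<- | ]; simpl; auto.
  - destruct (He x eq_refl); auto.
Qed.

Lemma wf_psubst s : forall e, wf s -> (forall w, free_in w s -> wf (e w)) -> wf (psubst e s).
Proof.
  induction s using term_nested_ind; intros e Hw He; cbn [psubst];
    try (simpl in *; auto; fail).
  - destruct Hw; split; [apply IHs1 | apply IHs2]; simpl in *; auto.
  - destruct Hw; split; [apply IHs1 | apply IHs2]; simpl in *; auto.
  - apply wf_Ext. apply wf_Ext in Hw. destruct Hw as (Hn & Hd & Hw).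
    rewrite map_fst_map_branches, map_branches_nil. repeat split; auto.
    intros l t Hin. apply in_map_branches in Hin. destruct Hin as (t0 & Hin & ->).
    apply H with l; eauto. intros w Hw'. apply He, free_in_Ext. eauto.
  - apply wf_Int. apply wf_Int in Hw. destruct Hw as (Hn & Hd & Hw).
    rewrite map_fst_map_branches, map_branches_nil. repeat split; auto.
    intros l t Hin. apply in_map_branches in Hin. destruct Hin as (t0 & Hin & ->).
    apply H with l; eauto. intros w Hw'. apply He, free_in_Int. eauto.
  - simpl in *. apply IHs; auto. intros w Hw'. unfold update.
    destruct (Nat.eqb_spec x w); simpl; auto.
Qed.

Lemma SC_psubst t e : guarded t -> wf t -> (forall w, free_in w t -> SC (e w)) ->
  SC (psubst e t).
Proof.
  intros G W H. split; [|split].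
  - apply closed_psubst. intros w Hw. apply H, Hw.
  - apply guarded_psubst; auto. intros w Hw. destruct (H w Hw) as (C & G' & _). auto.
  - apply wf_psubst; auto. intros w Hw. apply H, Hw.
Qed.

Lemma subst_psubst_update t : forall e y N,
  (forall w, free_in w t -> w <> y -> subst (e w) y N = e w) ->
  subst (psubst (update e y (Var y)) t) y N = psubst (update e y N) t.
Proof.
  induction t using term_nested_ind; intros e y N HE; cbn [psubst];
    try (simpl in *; f_equal; auto; fail).
  - rewrite subst_Ext, map_branches_comp. f_equal. apply map_branches_ext_in.
    intros l t Hin. apply (H l t Hin). intros w Hw. apply HE, free_in_Ext. eauto.
  - rewrite subst_Int, map_branches_comp. f_equal. apply map_branches_ext_in.
    intros l t Hin. apply (H l t Hin). intros w Hw. apply HE, free_in_Int. eauto.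
  - simpl in *. destruct (Nat.eqb_spec y x) as [<- | Hyx].
    + f_equal. apply psubst_ext. intros z _. unfold update.
      destruct (Nat.eqb_spec y z); auto.
    + f_equal.
      rewrite (psubst_ext t (update (update e y (Var y)) x (Var x))
                            (update (update e x (Var x)) y (Var y))).
      2:{ intros z _. unfold update.
          destruct (Nat.eqb_spec x z), (Nat.eqb_spec y z); subst; congruence. }
      rewrite IHt.
      * apply psubst_ext. intros z _. unfold update.
        destruct (Nat.eqb_spec x z), (Nat.eqb_spec y z); subst; congruence.
      * intros w Hw Hne. unfold update. destruct (Nat.eqb_spec x w) as [<- | ].
        -- simpl. destruct (Nat.eqb_spec y x); congruence.
        -- apply HE; auto.
  - unfold update. destruct (Nat.eqb_spec y x) as [<- | ].
    + simpl. now rewrite Nat.eqb_refl.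
    + apply HE; simpl; auto.
Qed.

Definition not_mu (s : term) : Prop := forall x s', s <> Mu x s'.

Lemma not_mu_or_mu (s : term) : not_mu s \/ exists x s', s = Mu x s'.
Proof. destruct s; try (left; intros ? ? ?; discriminate). right; eauto. Qed.

Lemma unfolds_not_mu s u : unfolds s u -> not_mu u.
Proof. induction 1; auto. Qed.

Lemma unfolds_not_mu_eq s u : not_mu s -> unfolds s u -> u = s.
Proof. intros N H. destruct H; auto. exfalso; eapply N; eauto. Qed.

Lemma unfolds_refl s : not_mu s -> unfolds s s.
Proof. constructor; auto. Qed.

Lemma unfolds_Mu_inv x s u : unfolds (Mu x s) u -> unfolds (subst s x (Mu x s)) u.
Proof. intros H; inversion H; subst; auto. exfalso; eapply H0; eauto. Qed.

Lemma unfolds_psubst_Mu e x s u :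
  (forall w, free_in w (Mu x s) -> closed (e w)) ->
  unfolds (psubst (update e x (psubst e (Mu x s))) s) u -> unfolds (psubst e (Mu x s)) u.
Proof.
  intros He Hu. simpl. constructor. fold (psubst e (Mu x s)).
  rewrite subst_psubst_update; auto.
  intros w Hw Hne. apply subst_closed, He. simpl; auto.
Qed.

Lemma SC_InT t s : SC (InT t s) <-> SC s.
Proof. reflexivity. Qed.

Lemma SC_OutT t s : SC (OutT t s) <-> SC s.
Proof. reflexivity. Qed.

Lemma SC_OutS m s : SC (OutS m s) <-> SC m /\ SC s.
Proof. unfold SC, closed. simpl. firstorder. Qed.

Lemma SC_InS m s : SC (InS m s) <-> SC m /\ SC s.
Proof. unfold SC, closed. simpl. firstorder. Qed.

Lemma SC_Ext bs :
  SC (Ext bs) <-> bs <> [] /\ NoDup (map fst bs) /\ forall l t, In (l, t) bs -> SC t.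
Proof.
  unfold SC, closed. setoid_rewrite free_in_Ext. rewrite guarded_Ext, wf_Ext. firstorder.
Qed.

Lemma SC_Int bs :
  SC (Int bs) <-> bs <> [] /\ NoDup (map fst bs) /\ forall l t, In (l, t) bs -> SC t.
Proof. exact (SC_Ext bs). Qed.

Lemma SC_Ext_In bs l t : SC (Ext bs) -> In (l, t) bs -> SC t.
Proof. intros H. apply SC_Ext in H. firstorder. Qed.

Lemma SC_Int_In bs l t : SC (Int bs) -> In (l, t) bs -> SC t.
Proof. exact (SC_Ext_In bs l t). Qed.

Lemma SC_Int_single l t : SC (Int [(l, t)]) <-> SC t.
Proof.
  rewrite SC_Int. split.
  - intros (_ & _ & H). eapply H. left; reflexivity.
  - intros H. split; [congruence|]. split; [repeat constructor; simpl; tauto|].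
    intros l' t' [E | []]. congruence.
Qed.

Lemma SC_Var x : ~ SC (Var x).
Proof. intros (C & _). apply (C x). reflexivity. Qed.

Lemma SC_Mu_unfold x s : SC (Mu x s) -> SC (subst s x (Mu x s)).
Proof.
  intros Hs. pose proof Hs as (C & [G1 G2] & W). rewrite subst_psubst.
  apply SC_psubst; auto. intros w Hw. unfold update.
  destruct (Nat.eqb_spec x w) as [<- | Hxw]; auto.
  exfalso. apply (C w). simpl; auto.
Qed.

Lemma SC_unfolds s u : unfolds s u -> SC s -> SC u.
Proof. induction 1; intros; auto. apply IHunfolds, SC_Mu_unfold; auto. Qed.

(* Guardedness is what makes unfolding terminate: along the unguarded
   occurrences the environment is assumed to unfold already. *)
Lemma unfolds_psubst_exists t : guarded t -> forall e,
  (forall w, free_in w t -> closed (e w)) ->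
  (forall w, unguarded w t -> exists u, unfolds (e w) u) ->
  exists u, unfolds (psubst e t) u.
Proof.
  induction t using term_nested_ind; intros G e HC HU;
    try (eexists; apply unfolds_refl; intros ? ? ?; discriminate).
  - destruct G as [Gn G].
    destruct (IHt G (update e x (psubst e (Mu x t)))) as (u & Hu).
    + intros w Hw. unfold update. destruct (Nat.eqb_spec x w).
      * apply closed_psubst. intros w' Hw'. apply HC, Hw'.
      * apply HC. simpl; auto.
    + intros w Hw. unfold update. destruct (Nat.eqb_spec x w) as [<- | ]; [contradiction|].
      apply HU. simpl; auto.
    + exists u. apply unfolds_psubst_Mu; auto.
  - apply HU. reflexivity.
Qed.

Lemma SC_unfolds_exists s : SC s -> exists u, unfolds s u.
Proof.
  intros (C & G & W). rewrite <- (psubst_Var s). apply unfolds_psubst_exists; auto.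
  - intros w Hw. exfalso; eapply C; eauto.
  - intros w Hw. exfalso; eapply C, unguarded_free; eauto.
Qed.

Local Notation par_tau := (@par_tau BT L leb).
Local Notation dual := (@dual BT L leb).
Local Notation compliance_post := (@compliance_post BT L leb).
Local Notation complies := (@complies BT L leb).

Definition no_tau (s : term) : Prop := forall s', ~ step s ATau s'.

Ltac no_tau_tac := let H := fresh in intros ? H; inversion H; simpl in *; lia.

Ltac invert_dual Hd :=
  match type of Hd with
  | dual _ ?a ?b => first [is_var a; destruct a | is_var b; destruct b | idtac];
                    simpl in Hd; try contradiction
  end.

Lemma step_ATick s s' : step s ATick s' -> s = One.
Proof. now inversion 1. Qed.


Lemma no_tau_dual_step_l B r a1 r' a2 : step r a1 r' -> dual B a1 a2 -> no_tau r.
Proof.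
  intros Hs Hd r'' Ht. inversion Ht; subst; inversion Hs; subst; simpl in *; try easy; lia.
Qed.


Lemma not_mu_dual_step_r B s a2 s' a1 : step s a2 s' -> dual B a1 a2 -> not_mu s.
Proof. intros Hs Hd x s0 ->. inversion Hs; subst. destruct a1; contradiction. Qed.

Section ComplianceFacts.
Variable B : term -> term -> Prop.

Lemma complies_post : compliance_post B (complies B).
Proof.
  intros r s (R & HR & Hrs). destruct (HR r s Hrs) as [H1 H2]. split; auto.
  intros r' s' Hp. exists R; auto.
Qed.

Lemma complies_par_tau r s r' s' : complies B r s -> par_tau B r s r' s' -> complies B r' s'.
Proof. intros H. apply (complies_post r s H). Qed.

Lemma complies_stuck r s : complies B r s -> (forall r' s', ~ par_tau B r s r' s') ->
  (exists r', step r ATick r') /\ (exists s', step s ATick s').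
Proof. intros H. apply (complies_post r s H). Qed.

Lemma complies_progress r s : complies B r s -> r <> One \/ s <> One ->
  exists r' s', par_tau B r s r' s'.
Proof.
  intros H Hne. apply NNPP. intros Hn.
  destruct (complies_stuck r s H) as [(r' & Hr) (s' & Hs)].
  - intros r' s' Hp. apply Hn; eauto.
  - apply step_ATick in Hr, Hs. tauto.
Qed.

Lemma complies_sync r s : complies B r s -> s <> One -> no_tau r -> no_tau s ->
  exists a1 a2 r' s', step r a1 r' /\ step s a2 s' /\ dual B a1 a2 /\ complies B r' s'.
Proof.
  intros H Hne Nr Ns. destruct (complies_progress r s H (or_intror Hne)) as (r' & s' & Hp).
  pose proof (complies_par_tau _ _ _ _ H Hp) as H'.
  inversion Hp; subst; [edestruct Nr | edestruct Ns | ]; eauto 10.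
Qed.

Lemma complies_intro r s : (exists r' s', par_tau B r s r' s') ->
  (forall r' s', par_tau B r s r' s' -> complies B r' s') -> complies B r s.
Proof.
  intros Hex Hall. exists (fun a b => complies B a b \/ (a = r /\ b = s)). split; auto.
  intros a b [H | [-> ->]].
  - destruct (complies_post a b H). auto.
  - split; auto. intros Hn. destruct Hex as (r' & s' & Hp). exfalso; eapply Hn; eauto.
Qed.

Lemma complies_One : complies B One One.
Proof.
  exists (fun a b => a = One /\ b = One). split; auto.
  intros a b [-> ->]. split.
  - split; exists One; constructor.
  - intros r' s' Hp. exfalso. inversion Hp; subst; inversion H; subst. inversion H0; subst.
    contradiction.
Qed.

Lemma complies_unfolds s u : unfolds s u -> forall r, complies B r s -> complies B r u.
Proof.
  induction 1; intros r H1; auto. apply IHunfolds. eapply complies_par_tau; eauto.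
  apply pt_right. constructor.
Qed.

Lemma complies_unfolds_inv s u : unfolds s u -> forall r, complies B r u -> complies B r s.
Proof.
  intros Hu r Hc.
  exists (fun a b => complies B a b \/ exists x s0, b = Mu x s0 /\ unfolds b u /\ complies B a u).
  split.
  2:{ destruct Hu as [x s0 u Hu |]; [right; exists x, s0 | left]; auto using unf_mu. }
  clear. intros a b [Hc | (x & s & -> & Hu & Hc)].
  { destruct (complies_post a b Hc). auto. }
  split.
  - intros Hs. exfalso. apply (Hs a (subst s x (Mu x s))), pt_right. constructor.
  - intros r' s' Hp. inversion Hp as [? ? ? Ha | ? ? ? Hb | ? ? ? ? a1 a2 _ Hb Hd]; subst.
    + right. exists x, s. repeat split; auto. eapply complies_par_tau; eauto. now apply pt_left.
    + inversion Hb; subst. apply unfolds_Mu_inv in Hu.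
      destruct (not_mu_or_mu (subst s x (Mu x s))) as [N | (y & s1 & E)].
      * left. now rewrite <- (unfolds_not_mu_eq _ _ N Hu).
      * right. exists y, s1. rewrite <- E. auto.
    + inversion Hb; subst. destruct a1; contradiction.
Qed.
End ComplianceFacts.

Lemma complies_Int_branch B r bs l x :
  complies B r (Int bs) -> In (l, x) bs -> complies B r (Int [(l, x)]).
Proof.
  intros H Hin. destruct bs as [|p [|q bs']].
  - destruct Hin.
  - destruct Hin as [<- | []]. exact H.
  - eapply complies_par_tau; eauto. apply pt_right, st_int; auto. simpl; lia.
Qed.

(** * The functional [S] and its greatest fixed point *)

Local Notation Sfun := (@Sfun BT L leb).
Local Notation nuS := (@nuS BT L leb).
Local Notation subB := (@subB BT L leb).

Definition S_clause (R B : term -> term -> Prop) (u1 s2 : term) : Prop :=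
  match u1 with
  | One => unfolds s2 One
  | InT t1 s1' => exists t2 s2', unfolds s2 (InT t2 s2') /\ R s1' s2' /\ leb t1 t2
  | OutT t1 s1' => exists t2 s2', unfolds s2 (OutT t2 s2') /\ R s1' s2' /\ leb t2 t1
  | OutS m1 s1' => exists m2 s2', unfolds s2 (OutS m2 s2') /\ R s1' s2' /\ B m2 m1
  | InS m1 s1' => exists m2 s2', unfolds s2 (InS m2 s2') /\ R s1' s2' /\ B m1 m2
  | Ext bs1 => exists bs2, unfolds s2 (Ext bs2) /\
      forall l s1', In (l, s1') bs1 -> exists s2', In (l, s2') bs2 /\ R s1' s2'
  | Int bs1 => exists bs2, unfolds s2 (Int bs2) /\
      forall l s2', In (l, s2') bs2 -> exists s1', In (l, s1') bs1 /\ R s1' s2'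
  | Mu _ _ | Var _ => False
  end.

Lemma S_clause_mono (R R' B B' : term -> term -> Prop) u s :
  (forall a b, R a b -> R' a b) -> (forall a b, B a b -> B' a b) ->
  S_clause R B u s -> S_clause R' B' u s.
Proof.
  intros HR HB H. destruct u; simpl in *; auto;
    try (destruct H as (t2 & s2 & ? & ? & ?); eauto 10; fail);
    destruct H as (bs2 & ? & H); exists bs2; split; auto;
    intros l0 s1' Hin; destruct (H l0 s1' Hin) as (? & ? & ?); eauto.
Qed.

Lemma S_clause_unfolds_r (R B : term -> term -> Prop) u s s' :
  (forall X, unfolds s X -> unfolds s' X) -> S_clause R B u s -> S_clause R B u s'.
Proof.
  intros HU H. destruct u; simpl in *; auto;
    try (destruct H as (t2 & s2 & ? & ? & ?); eauto 10; fail);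
    destruct H as (bs2 & ? & H); eauto.
Qed.

Lemma S_clause_Int_r (R B : term -> term -> Prop) u bs2 l y :
  S_clause R B u (Int bs2) -> In (l, y) bs2 -> exists bs1 x, u = Int bs1 /\ In (l, x) bs1 /\ R x y.
Proof.
  assert (N : not_mu (Int bs2)) by discriminate.
  intros HS Hin. destruct u; simpl in HS; try contradiction;
    try (destruct HS as (? & ? & Hu & _); apply (unfolds_not_mu_eq _ _ N) in Hu; discriminate);
    try (destruct HS as (? & Hu & _); apply (unfolds_not_mu_eq _ _ N) in Hu; discriminate).
  - apply (unfolds_not_mu_eq _ _ N) in HS. discriminate.
  - destruct HS as (bs2' & Hu & HS). apply (unfolds_not_mu_eq _ _ N) in Hu. injection Hu as ->.
    destruct (HS l y Hin) as (x & ? & ?). eauto.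
Qed.

Lemma nuS_coind (X : term -> term -> Prop) :
  (forall x y, X x y -> SC x /\ SC y /\ Sfun X X x y) -> forall a b, X a b -> nuS a b.
Proof. intros H a b Hab. exists X. auto. Qed.

Lemma nuS_post a b : nuS a b -> SC a /\ SC b /\ Sfun nuS nuS a b.
Proof.
  intros (X & HX & Hab). destruct (HX a b Hab) as (Ha & Hb & HS). do 2 (split; auto).
  intros u Hu. eapply S_clause_mono; [| | apply HS; auto]; intros; eapply nuS_coind; eauto.
Qed.

Lemma nuS_clause a b u : nuS a b -> unfolds a u -> S_clause nuS nuS u b.
Proof. intros H. apply (nuS_post a b H). Qed.

Section NuPreorder.
Hypothesis leb_preorder : PreOrder leb.

Lemma nuS_refl s : SC s -> nuS s s.
Proof.
  intros Hs. apply (nuS_coind (fun a b => a = b /\ SC a)); auto.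
  clear -leb_preorder. intros x y [<- Hx]. do 2 (split; auto). intros u Hu.
  pose proof (SC_unfolds _ _ Hu Hx) as Su. pose proof (unfolds_not_mu _ _ Hu) as Nu.
  destruct u; simpl.
  - auto.
  - exists b, u. apply SC_InT in Su. split; [auto | split; [split; auto | apply leb_preorder]].
  - exists b, u. apply SC_OutT in Su. split; [auto | split; [split; auto | apply leb_preorder]].
  - exists u1, u2. apply SC_OutS in Su. tauto.
  - exists u1, u2. apply SC_InS in Su. tauto.
  - exists l. split; auto. intros l0 s1' Hin. exists s1'. eauto using SC_Ext_In.
  - exists l. split; auto. intros l0 s1' Hin. exists s1'. eauto using SC_Int_In.
  - eapply Nu; eauto.
  - eapply SC_Var; eauto.
Qed.

Lemma nuS_trans a b c : nuS a b -> nuS b c -> nuS a c.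
Proof.
  intros Hab Hbc. apply (nuS_coind (fun x z => exists y, nuS x y /\ nuS y z)); eauto.
  clear -leb_preorder. intros x z (y & Hxy & Hyz).
  destruct (nuS_post _ _ Hxy) as (Hx & _ & S1), (nuS_post _ _ Hyz) as (_ & Hz & S2).
  do 2 (split; auto). intros u1 Hu1. specialize (S1 u1 Hu1).
  destruct u1; simpl in S1 |- *; try contradiction.
  - exact (S2 One S1).
  - destruct S1 as (t2 & y' & Hu2 & H1 & L1), (S2 _ Hu2) as (t3 & z' & Hu3 & H2 & L2).
    exists t3, z'. split; [auto|split; [eauto|eapply (PreOrder_Transitive (R := leb)); eauto]].
  - destruct S1 as (t2 & y' & Hu2 & H1 & L1), (S2 _ Hu2) as (t3 & z' & Hu3 & H2 & L2).
    exists t3, z'. split; [auto|split; [eauto|eapply (PreOrder_Transitive (R := leb)); eauto]].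
  - destruct S1 as (t2 & y' & Hu2 & H1 & L1), (S2 _ Hu2) as (t3 & z' & Hu3 & H2 & L2).
    exists t3, z'. eauto 7.
  - destruct S1 as (t2 & y' & Hu2 & H1 & L1), (S2 _ Hu2) as (t3 & z' & Hu3 & H2 & L2).
    exists t3, z'. eauto 7.
  - destruct S1 as (bs2 & Hu2 & H1), (S2 _ Hu2) as (bs3 & Hu3 & H2).
    exists bs3. split; auto. intros l0 x' Hin.
    destruct (H1 _ _ Hin) as (y' & Hin2 & Hxy'), (H2 _ _ Hin2) as (z' & Hin3 & Hyz'). eauto.
  - destruct S1 as (bs2 & Hu2 & H1), (S2 _ Hu2) as (bs3 & Hu3 & H2).
    exists bs3. split; auto. intros l0 z' Hin.
    destruct (H2 _ _ Hin) as (y' & Hin2 & Hyz'), (H1 _ _ Hin2) as (x' & Hin1 & Hxy'). eauto.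
Qed.

(** * Soundness: [nuS] refines compliance *)

(* [s] inherits the clients of every [u] with [S_clause nuS nuS u s]. *)
Definition complies_via_nuS (a s : term) : Prop :=
  SC s /\ exists u, complies nuS a u /\ S_clause nuS nuS u s.

Lemma complies_via_nuS_intro a x y : nuS x y -> complies nuS a x -> complies_via_nuS a y.
Proof.
  intros Hxy Ha. destruct (nuS_post _ _ Hxy) as (Hx & Hy & _).
  destruct (SC_unfolds_exists x Hx) as (u & Hu). split; auto.
  exists u. split; [eapply complies_unfolds | eapply nuS_clause]; eauto.
Qed.


Lemma complies_via_nuS_stuck a s : complies_via_nuS a s ->
  (forall a' s', ~ par_tau nuS a s a' s') ->
  (exists a', step a ATick a') /\ (exists s', step s ATick s').
Proof.
  intros (SCs & u & Cu & HS) Hst.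
  assert (Na : no_tau a) by (intros a' H; eapply Hst, pt_left, H).
  assert (Ns : not_mu s) by (intros x s' ->; eapply Hst, pt_right; constructor).
  assert (Sync : forall a1 a' a2 s', step a a1 a' -> step s a2 s' -> dual nuS a1 a2 -> False)
    by (intros; eapply Hst, pt_sync; eauto).
  assert (Tleb : forall x y z, leb x y -> leb y z -> leb x z) by apply leb_preorder.
  assert (Trans := nuS_trans).
  destruct u as [|t1 x|t1 x|m1 x|m1 x|bs1|bs1|? ?|?]; simpl in HS; try contradiction.
  1: apply (unfolds_not_mu_eq _ _ Ns) in HS as <-; exact (complies_stuck _ _ _ Cu Hst).
  1-4: destruct HS as (? & y & Hu & _ & Hy); apply (unfolds_not_mu_eq _ _ Ns) in Hu as <-;
    destruct (complies_sync _ _ _ Cu ltac:(discriminate) Na ltac:(no_tau_tac))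
      as (b1 & b2 & a' & x' & Hb1 & Hb2 & Hd & _);
    inversion Hb2; subst; invert_dual Hd;
    exfalso; eapply Sync; [eauto | constructor | simpl; eauto].
  - destruct HS as (bs2 & Hu & HS). apply (unfolds_not_mu_eq _ _ Ns) in Hu as <-.
    destruct (complies_sync _ _ _ Cu ltac:(discriminate) Na ltac:(no_tau_tac))
      as (b1 & b2 & a' & x' & Hb1 & Hb2 & Hd & _).
    inversion Hb2 as [| | | | | | | ? l ? Hin |]; subst. invert_dual Hd. subst.
    destruct (HS _ _ Hin) as (y & Hy & _).
    exfalso. eapply Sync; [eauto | apply st_ext; eauto | reflexivity].
  - destruct HS as (bs2 & Hu & HS). apply (unfolds_not_mu_eq _ _ Ns) in Hu as <-.
    destruct bs2 as [|[l y] [|q bs2']].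
    + apply SC_Int in SCs. tauto.
    + destruct (HS l y (or_introl eq_refl)) as (x & Hx & _).
      pose proof (complies_Int_branch _ _ _ _ _ Cu Hx) as C1.
      destruct (complies_sync _ _ _ C1 ltac:(discriminate) Na ltac:(no_tau_tac))
        as (b1 & b2 & a' & x' & Hb1 & Hb2 & Hd & _).
      inversion Hb2; subst; [|simpl in *; lia]. invert_dual Hd. subst.
      exfalso. eapply Sync; [eauto | constructor | reflexivity].
    + exfalso. eapply Hst, pt_right, st_int with (l := l) (s := y); simpl; auto. lia.
Qed.

Lemma complies_via_nuS_sync a s a1 a2 a' s' : complies_via_nuS a s ->
  step a a1 a' -> step s a2 s' -> dual nuS a1 a2 -> complies_via_nuS a' s'.
Proof.
  intros (SCs & u & Cu & HS) Ha Hs Hd.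
  pose proof (not_mu_dual_step_r _ _ _ _ _ Hs Hd) as Ns.
  pose proof (no_tau_dual_step_l _ _ _ _ _ Ha Hd) as Na.
  enough (exists x, nuS x s' /\ complies nuS a' x) as (x & Hx & Cx)
    by (eapply complies_via_nuS_intro; eauto).
  destruct u as [|t1 x|t1 x|m1 x|m1 x|bs1|bs1|? ?|?]; simpl in HS; try contradiction.
  1: apply (unfolds_not_mu_eq _ _ Ns) in HS as <-; inversion Hs; subst; invert_dual Hd.
  1-4: destruct HS as (? & y & Hu & Hxy & _); apply (unfolds_not_mu_eq _ _ Ns) in Hu as <-;
    inversion Hs; subst; invert_dual Hd; inversion Ha; subst;
    destruct (complies_sync _ _ _ Cu ltac:(discriminate) Na ltac:(no_tau_tac))
      as (b1 & b2 & a'' & x'' & Hb1 & Hb2 & _ & C);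
    inversion Hb1; inversion Hb2; subst; eauto.
  - destruct HS as (bs2 & Hu & HS). apply (unfolds_not_mu_eq _ _ Ns) in Hu as <-.
    inversion Hs as [| | | | | | | ? l ? Hin |]; subst. invert_dual Hd. subst.
    inversion Ha; subst.
    destruct (complies_sync _ _ _ Cu ltac:(discriminate) Na ltac:(no_tau_tac))
      as (b1 & b2 & a'' & x & Hb1 & Hb2 & Hd & C).
    inversion Hb1; subst; [|simpl in *; lia]. inversion Hb2 as [| | | | | | | ? l' ? Hx |]; subst.
    invert_dual Hd. subst. destruct (HS _ _ Hx) as (y & Hy & Hxy). apply SC_Ext in SCs.
    rewrite (NoDup_fst_In_eq _ _ _ _ (proj1 (proj2 SCs)) Hin Hy). eauto.
  - destruct HS as (bs2 & Hu & HS). apply (unfolds_not_mu_eq _ _ Ns) in Hu as <-.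
    inversion Hs; subst; invert_dual Hd. subst.
    destruct (HS l s' (or_introl eq_refl)) as (x & Hx & Hxs).
    exists x. split; auto. eapply complies_par_tau.
    + exact (complies_Int_branch _ _ _ _ _ Cu Hx).
    + eapply pt_sync; [exact Ha | constructor | reflexivity].
Qed.

Lemma complies_via_nuS_tau_r a s s' : complies_via_nuS a s -> step s ATau s' ->
  complies_via_nuS a s'.
Proof.
  intros (SCs & u & Cu & HS) Hs. inversion Hs as [| | | | | | bs l y _ Hin | | x s0]; subst.
  - destruct (S_clause_Int_r _ _ _ _ _ _ HS Hin) as (bs1 & x & -> & Hx & Hxy).
    split; [apply SC_Int_single; eauto using SC_Int_In|].
    exists (Int [(l, x)]). split; [eapply complies_Int_branch; eauto|].
    exists [(l, y)]. split; [apply unfolds_refl; discriminate|].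
    intros l' y' [E | []]. injection E as <- <-. exists x. split; [left|]; auto.
  - split; [now apply SC_Mu_unfold|]. exists u. split; auto.
    eapply S_clause_unfolds_r; [|eauto]. apply unfolds_Mu_inv.
Qed.

Lemma complies_via_nuS_post : compliance_post nuS complies_via_nuS.
Proof.
  intros a s H. split; [now apply complies_via_nuS_stuck|].
  intros a' s' Hp. inversion Hp as [? ? ? Ha | ? ? ? Hs | ? ? ? ? a1 a2 Ha Hs Hd]; subst.
  - destruct H as (SCs & u & Cu & HS). split; auto. exists u. split; auto.
    eapply complies_par_tau; eauto. now apply pt_left.
  - eapply complies_via_nuS_tau_r; eauto.
  - eapply complies_via_nuS_sync; eauto.
Qed.

Lemma nuS_complies s1 s2 r : nuS s1 s2 -> complies nuS r s1 -> complies nuS r s2.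
Proof.
  intros H12 Hr. exists complies_via_nuS. split; [apply complies_via_nuS_post|].
  eapply complies_via_nuS_intro; eauto.
Qed.
End NuPreorder.

Section MatchingPairs.
Variables (B Q : term -> term -> Prop).

Definition matches_unfolded (ur us : term) : Prop :=
  match us with
  | One => ur = One
  | InT t s' => exists t' r', ur = OutT t' r' /\ leb t' t /\ Q r' s'
  | OutT t s' => exists t' r', ur = InT t' r' /\ leb t t' /\ Q r' s'
  | OutS m s' => exists m' r', ur = InS m' r' /\ B m m' /\ Q r' s'
  | InS m s' => exists m' r', ur = OutS m' r' /\ B m' m /\ Q r' s'
  | Ext bs => exists cs, ur = Int cs /\ cs <> [] /\
      forall l r', In (l, r') cs ->
        (exists s', In (l, s') bs) /\ forall s', In (l, s') bs -> Q r' s'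
  | Int bs => exists cs, ur = Ext cs /\ bs <> [] /\
      forall l s', In (l, s') bs ->
        (exists r', In (l, r') cs) /\ forall r', In (l, r') cs -> Q r' s'
  | _ => False
  end.

Definition matches (r s : term) : Prop :=
  exists ur us, unfolds r ur /\ unfolds s us /\ matches_unfolded ur us.

Hypothesis Q_matches : forall r s, Q r s -> matches r s.

Lemma matches_stuck r s : matches r s -> (forall r' s', ~ par_tau B r s r' s') ->
  (exists r', step r ATick r') /\ (exists s', step s ATick s').
Proof.
  intros (ur & us & Hur & Hus & HM) Hst.
  assert (Nr : not_mu r) by (intros x s' ->; eapply Hst, pt_left; constructor).
  assert (Ns : not_mu s) by (intros x s' ->; eapply Hst, pt_right; constructor).
  apply (unfolds_not_mu_eq _ _ Nr) in Hur as ->. apply (unfolds_not_mu_eq _ _ Ns) in Hus as ->.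
  destruct s as [|t0 s|t0 s|m0 s|m0 s|bs|bs|x0 s|x0]; simpl in HM; try contradiction.
  1: subst; split; exists One; constructor.
  all: exfalso.
  1-4: destruct HM as (t' & r' & -> & Hl & _);
    eapply Hst, pt_sync; [constructor | constructor | simpl; eauto].
  - destruct HM as (cs & -> & Hne & Hc). destruct cs as [|[l r'] [|c cs']]; [congruence| |].
    + destruct (Hc l r' (or_introl eq_refl)) as [(s' & Hs') _].
      eapply Hst, pt_sync; [constructor | apply st_ext; eauto | reflexivity].
    + eapply Hst, pt_left, st_int with (l := l) (s := r'); simpl; auto. lia.
  - destruct HM as (cs & -> & Hne & Hc). destruct bs as [|[l s'] [|c bs']]; [congruence| |].
    + destruct (Hc l s' (or_introl eq_refl)) as [(r' & Hr') _].
      eapply Hst, pt_sync; [apply st_ext; eauto | constructor | reflexivity].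
    + eapply Hst, pt_right, st_int with (l := l) (s := s'); simpl; auto. lia.
Qed.

Ltac absurd_shape HM :=
  first [ discriminate HM
        | destruct HM as (? & ? & E & _); discriminate E
        | destruct HM as (? & E & _); discriminate E ].

Lemma matches_step r s r' s' : matches r s -> par_tau B r s r' s' -> matches r' s'.
Proof.
  intros (ur & us & Hur & Hus & HM) Hp.
  inversion Hp as [? ? ? Hst | ? ? ? Hst | ? ? ? ? a1 a2 Hs1 Hs2 Hd]; subst.
  - destruct (not_mu_or_mu r) as [Nr | (x & r0 & ->)].
    + apply (unfolds_not_mu_eq _ _ Nr) in Hur as <-.
      inversion Hst as [| | | | | | cs l t _ Hin | |]; subst; [|edestruct Nr; eauto].
      destruct us as [| | | | | bs | | |]; simpl in HM; try contradiction; try absurd_shape HM.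
      destruct HM as (cs' & E & _ & Hc). injection E as <-.
      exists (Int [(l, t)]), (Ext bs). split; [apply unfolds_refl; discriminate|].
      split; [exact Hus|]. exists [(l, t)]. split; [reflexivity|]. split; [discriminate|].
      intros l1 r1 [E | []]. injection E as <- <-. auto.
    + inversion Hst; subst. exists ur, us. auto using unfolds_Mu_inv.
  - destruct (not_mu_or_mu s) as [Ns | (x & s0 & ->)].
    + apply (unfolds_not_mu_eq _ _ Ns) in Hus as <-.
      inversion Hst as [| | | | | | bs l t _ Hin | |]; subst; [|edestruct Ns; eauto].
      simpl in HM. destruct HM as (cs & -> & _ & Hc).
      exists (Ext cs), (Int [(l, t)]). split; [exact Hur|].
      split; [apply unfolds_refl; discriminate|]. exists cs. split; [reflexivity|]. split; [discriminate|].
      intros l1 s1 [E | []]. injection E as <- <-. auto.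
    + inversion Hst; subst. exists ur, us. auto using unfolds_Mu_inv.
  - apply (unfolds_not_mu_eq _ _ (not_mu_dual_step_r _ _ _ _ _ Hs2 Hd)) in Hus as <-.
    assert (Nr : not_mu r) by (intros x r0 ->; inversion Hs1; subst; destruct a2; contradiction).
    apply (unfolds_not_mu_eq _ _ Nr) in Hur as <-.
    destruct us as [|? ?|? ?|? ?|? ?|bs|bs|? ?|?]; simpl in HM; try contradiction.
    1: subst; inversion Hs2; subst; invert_dual Hd.
    1-4: destruct HM as (? & ? & -> & _ & HQ); inversion Hs1; inversion Hs2; subst; auto.
    + destruct HM as (cs & -> & _ & Hc). inversion Hs2 as [| | | | | | | ? l ? Hin |]; subst.
      inversion Hs1; subst; invert_dual Hd; subst.
      apply Q_matches. eapply (proj2 (Hc _ _ (or_introl eq_refl))); eauto.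
    + destruct HM as (cs & -> & _ & Hc). inversion Hs1 as [| | | | | | | ? l ? Hin |]; subst.
      inversion Hs2; subst; invert_dual Hd; subst.
      apply Q_matches. eapply (proj2 (Hc _ _ (or_introl eq_refl))); eauto.
Qed.

Lemma matches_complies r s : matches r s -> complies B r s.
Proof.
  intros H. exists matches. split; auto.
  intros a b Hab. split; [now apply matches_stuck | intros; eapply matches_step; eauto].
Qed.
End MatchingPairs.

(** * The canonical client of a contract *)

(* Session arguments are copied from the contract, so they must be closed:
   [e] supplies the contract terms bound to the recursion variables free in
   them. *)
Fixpoint dual_term (e : nat -> term) (s : term) : term :=
  match s with
  | One => One
  | InT t s => OutT t (dual_term e s)
  | OutT t s => InT t (dual_term e s)
  | OutS m s => InS (psubst e m) (dual_term e s)
  | InS m s => OutS (psubst e m) (dual_term e s)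
  | Ext bs => Int (map_branches (dual_term e) bs)
  | Int bs => Ext (map_branches (dual_term e) bs)
  | Mu x s => Mu x (dual_term (update e x (psubst e (Mu x s))) s)
  | Var x => Var x
  end.

Definition client (s : term) : term := dual_term (fun x => Var x) s.

Lemma free_in_dual_term t : forall e z, free_in z (dual_term e t) ->
  free_in z t \/ exists w, free_in w t /\ free_in z (e w).
Proof.
  induction t using term_nested_ind; intros e z Hz; cbn [dual_term] in Hz.
  - contradiction.
  - destruct (IHt e z Hz) as [? | (w & ? & ?)]; simpl; eauto.
  - destruct (IHt e z Hz) as [? | (w & ? & ?)]; simpl; eauto.
  - destruct Hz as [Hz | Hz].
    + apply free_in_psubst in Hz. destruct Hz as (w & ? & ?). right. exists w; simpl; auto.
    + destruct (IHt2 e z Hz) as [? | (w & ? & ?)]; simpl; eauto.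
  - destruct Hz as [Hz | Hz].
    + apply free_in_psubst in Hz. destruct Hz as (w & ? & ?). right. exists w; simpl; auto.
    + destruct (IHt2 e z Hz) as [? | (w & ? & ?)]; simpl; eauto.
  - apply free_in_Int in Hz. destruct Hz as (l & t & Hin & Hf).
    apply in_map_branches in Hin. destruct Hin as (t0 & Hin & ->).
    rewrite free_in_Ext. destruct (H l t0 Hin e z Hf) as [? | (w & ? & ?)]; eauto 7.
    right. exists w. rewrite free_in_Ext. eauto.
  - apply free_in_Ext in Hz. destruct Hz as (l & t & Hin & Hf).
    apply in_map_branches in Hin. destruct Hin as (t0 & Hin & ->).
    rewrite free_in_Int. destruct (H l t0 Hin e z Hf) as [? | (w & ? & ?)]; eauto 7.
    right. exists w. rewrite free_in_Int. eauto.
  - destruct Hz as [Hne Hz]. destruct (IHt _ _ Hz) as [Hf | (w & Hw & Hf)]; [simpl; auto|].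
    destruct (Nat.eqb_spec x w) as [<- | Hxw].
    + rewrite update_eq in Hf. apply free_in_psubst in Hf. eauto.
    + rewrite update_neq in Hf by auto. right. exists w. simpl; auto.
  - simpl in Hz. auto.
Qed.

Lemma free_in_dual_term_closed t e z : (forall w, free_in w t -> closed (e w)) ->
  free_in z (dual_term e t) -> free_in z t.
Proof.
  intros He Hz. destruct (free_in_dual_term t e z Hz) as [? | (w & Hw & Hf)]; auto.
  exfalso. eapply He; eauto.
Qed.

Lemma closed_psubst_dual_term t e ce : (forall w, free_in w t -> closed (e w)) ->
  (forall w, free_in w t -> closed (ce w)) -> closed (psubst ce (dual_term e t)).
Proof.
  intros He Hce. apply closed_psubst. intros w Hw.
  apply Hce, free_in_dual_term_closed with e; auto.
Qed.

Lemma unguarded_dual_term t : forall e z, unguarded z (dual_term e t) -> unguarded z t.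
Proof.
  induction t using term_nested_ind; intros e z Hz; simpl in *; try tauto.
  destruct Hz as [? Hz]. eauto.
Qed.

Lemma guarded_wf_dual_term t : forall e, guarded t -> wf t ->
  (forall w, free_in w t -> SC (e w)) -> guarded (dual_term e t) /\ wf (dual_term e t).
Proof.
  induction t as [|b s IH|b s IH|m s IHm IH|m s IHm IH|bs IH|bs IH|x s IH|x]
    using term_nested_ind; intros e G W He; cbn [dual_term];
    try (simpl in *; auto; fail).
  - simpl in *. destruct G, W.
    destruct (IH e), (SC_psubst m e) as (_ & ? & ?); auto.
  - simpl in *. destruct G, W.
    destruct (IH e), (SC_psubst m e) as (_ & ? & ?); auto.
  - rewrite guarded_Int, wf_Int, map_fst_map_branches, map_branches_nil.
    rewrite guarded_Ext in G. apply wf_Ext in W. destruct W as (Wn & Wd & Wl).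
    assert (IHb : forall l t, In (l, t) bs -> guarded (dual_term e t) /\ wf (dual_term e t)).
    { intros l t Hin. apply (IH l t Hin); eauto. intros w Hw. apply He, free_in_Ext. eauto. }
    repeat split; auto; intros l t Hin; apply in_map_branches in Hin;
      destruct Hin as (t0 & Hin & ->); apply (IHb l t0 Hin).
  - rewrite guarded_Ext, wf_Ext, map_fst_map_branches, map_branches_nil.
    rewrite guarded_Int in G. apply wf_Int in W. destruct W as (Wn & Wd & Wl).
    assert (IHb : forall l t, In (l, t) bs -> guarded (dual_term e t) /\ wf (dual_term e t)).
    { intros l t Hin. apply (IH l t Hin); eauto. intros w Hw. apply He, free_in_Int. eauto. }
    repeat split; auto; intros l t Hin; apply in_map_branches in Hin;
      destruct Hin as (t0 & Hin & ->); apply (IHb l t0 Hin).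
  - simpl in G, W. destruct G as [Gn G]. destruct (IH (update e x (psubst e (Mu x s))))
      as [G' W']; auto.
    + intros w Hw. unfold update. destruct (Nat.eqb_spec x w) as [<- | ].
      * apply (SC_psubst (Mu x s)); simpl; auto.
      * apply He. simpl; auto.
    + simpl. split; auto. split; auto. intros Hu. apply unguarded_dual_term in Hu. auto.
Qed.

(* The client and the contract unfold the same recursion variable to different
   terms, so compliance is proved for all instances of a body at once. *)
Inductive dual_instance : term -> term -> Prop :=
| dual_instance_intro : forall t e ce, guarded t -> wf t ->
    (forall x, free_in x t -> SC (e x)) -> (forall x, free_in x t -> closed (ce x)) ->
    (forall x, free_in x t -> dual_instance (ce x) (e x)) ->
    dual_instance (psubst ce (dual_term e t)) (psubst e t).

Section CanonicalClient.
Variable B : term -> term -> Prop.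
Hypothesis B_refl : forall m, SC m -> B m m.
Hypothesis leb_refl : forall t, leb t t.

Ltac unfold_both := do 2 eexists; split; [apply unfolds_refl; discriminate|];
  split; [apply unfolds_refl; discriminate|]; cbn [matches_unfolded].

Lemma matches_psubst_Mu Q x s e ce :
  (forall w, free_in w (Mu x s) -> SC (e w)) -> (forall w, free_in w (Mu x s) -> closed (ce w)) ->
  matches B Q (psubst (update ce x (psubst ce (dual_term e (Mu x s))))
                      (dual_term (update e x (psubst e (Mu x s))) s))
              (psubst (update e x (psubst e (Mu x s))) s) ->
  matches B Q (psubst ce (dual_term e (Mu x s))) (psubst e (Mu x s)).
Proof.
  intros He Hce (ur & us & Hur & Hus & HM). exists ur, us.
  split; [|split]; auto; apply unfolds_psubst_Mu; auto; intros w Hw; [|apply He, Hw].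
  apply Hce, free_in_dual_term_closed with e; auto. intros w' Hw'. apply He, Hw'.
Qed.

Lemma dual_instance_matches_psubst t : forall e ce, guarded t -> wf t ->
  (forall x, free_in x t -> SC (e x)) -> (forall x, free_in x t -> closed (ce x)) ->
  (forall x, free_in x t -> dual_instance (ce x) (e x)) ->
  (forall x, unguarded x t -> matches B dual_instance (ce x) (e x)) ->
  matches B dual_instance (psubst ce (dual_term e t)) (psubst e t).
Proof.
  induction t as [|b s IH|b s IH|m s IHm IH|m s IHm IH|bs IH|bs IH|x s IH|x]
    using term_nested_ind; intros e ce G W He Hce Hd Hu.
  8: { destruct G as [Gx G]. apply matches_psubst_Mu; auto.
       apply IH; auto; intros w Hw; unfold update; destruct (Nat.eqb_spec x w) as [<- | Hxw].
       - apply SC_psubst; simpl; auto.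
       - apply He. simpl; auto.
       - apply closed_psubst_dual_term; intros; [apply He | apply Hce]; auto.
       - apply Hce. simpl; auto.
       - apply dual_instance_intro; simpl; auto.
       - apply Hd. simpl; auto.
       - contradiction.
       - apply Hu. simpl; auto. }
  all: cbn [psubst dual_term].
  1: unfold_both; reflexivity.
  1-2: unfold_both; do 2 eexists; split; [reflexivity|];
    split; [apply leb_refl | apply dual_instance_intro; simpl in *; auto].
  1-2: simpl in G, W;
    assert (Hm : SC (psubst e m)) by (apply SC_psubst; simpl in *; intuition);
    rewrite (psubst_closed _ _ (proj1 Hm)); unfold_both; do 2 eexists; split; [reflexivity|];
    split; [now apply B_refl | apply dual_instance_intro; simpl in *; intuition].
  - rewrite guarded_Ext in G. apply wf_Ext in W as (Wn & Wd & Wl).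
    rewrite map_branches_comp. unfold_both. eexists. split; [reflexivity|].
    split; [now rewrite map_branches_nil|].
    intros l r' Hin. apply in_map_branches in Hin as (t1 & Hin & ->). split.
    + exists (psubst e t1). apply in_map_branches; eauto.
    + intros s' Hs'. apply in_map_branches in Hs' as (t2 & Hin2 & ->).
      rewrite (NoDup_fst_In_eq bs l t2 t1) by auto.
      apply dual_instance_intro; eauto; intros; [apply He | apply Hce | apply Hd];
        apply free_in_Ext; eauto.
  - rewrite guarded_Int in G. apply wf_Int in W as (Wn & Wd & Wl).
    rewrite map_branches_comp. unfold_both. eexists. split; [reflexivity|].
    split; [now rewrite map_branches_nil|].
    intros l s' Hin. apply in_map_branches in Hin as (t1 & Hin & ->). split.
    + exists (psubst ce (dual_term e t1)). apply in_map_branches; eauto.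
    + intros r' Hr'. apply in_map_branches in Hr' as (t2 & Hin2 & ->).
      rewrite (NoDup_fst_In_eq bs l t2 t1) by auto.
      apply dual_instance_intro; eauto; intros; [apply He | apply Hce | apply Hd];
        apply free_in_Int; eauto.
  - apply Hu. reflexivity.
Qed.

Lemma dual_instance_matches r s : dual_instance r s -> matches B dual_instance r s.
Proof.
  induction 1 as [t e ce G W He Hce Hd IH]. apply dual_instance_matches_psubst; auto.
  intros x Hx. apply IH, unguarded_free, Hx.
Qed.

Lemma client_complies s : SC s -> complies B (client s) s.
Proof.
  intros (C & G & W).
  apply (matches_complies B dual_instance dual_instance_matches), dual_instance_matches.
  pose proof (dual_instance_intro s (fun x => Var x) (fun x => Var x)) as D.
  rewrite !psubst_Var in D. apply D; auto; intros w Hw; exfalso; eapply C; eauto.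
Qed.
End CanonicalClient.

Lemma SC_client s : SC s -> SC (client s).
Proof.
  intros (C & G & W). destruct (guarded_wf_dual_term s (fun x => Var x)) as [G' W']; auto.
  - intros w Hw. exfalso; eapply C; eauto.
  - split; auto. intros z Hz. apply free_in_dual_term in Hz as [Hz | (w & Hw & _)];
      eapply C; eauto.
Qed.

(** * Completeness: clients separate contracts *)

Ltac invert_steps :=
  repeat match goal with
  | H : step ?s _ _ |- _ => tryif is_var s then fail else (inversion H; subst; clear H)
  end; try (simpl in *; solve [contradiction | lia]).

Section ClientShapes.
Variable B : term -> term -> Prop.

Lemma complies_OutT_InT t t' rho x : leb t t' -> complies B rho x ->
  complies B (OutT t rho) (InT t' x).
Proof.
  intros Hl C. apply complies_intro.
  - do 2 eexists. eapply pt_sync; [constructor | constructor | exact Hl].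
  - intros r' s' Hp. inversion Hp; subst; invert_steps; auto.
Qed.

Lemma complies_InT_OutT t t' rho x : leb t' t -> complies B rho x ->
  complies B (InT t rho) (OutT t' x).
Proof.
  intros Hl C. apply complies_intro.
  - do 2 eexists. eapply pt_sync; [constructor | constructor | exact Hl].
  - intros r' s' Hp. inversion Hp; subst; invert_steps; auto.
Qed.

Lemma complies_InS_OutS m m' rho x : B m m' -> complies B rho x ->
  complies B (InS m' rho) (OutS m x).
Proof.
  intros Hm C. apply complies_intro.
  - do 2 eexists. eapply pt_sync; [constructor | constructor | exact Hm].
  - intros r' s' Hp. inversion Hp; subst; invert_steps; auto.
Qed.

Lemma complies_OutS_InS m m' rho x : B m' m -> complies B rho x ->
  complies B (OutS m' rho) (InS m x).
Proof.
  intros Hm C. apply complies_intro.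
  - do 2 eexists. eapply pt_sync; [constructor | constructor | exact Hm].
  - intros r' s' Hp. inversion Hp; subst; invert_steps; auto.
Qed.

Lemma complies_Int_single_Ext l rho bs x : NoDup (map fst bs) -> In (l, x) bs ->
  complies B rho x -> complies B (Int [(l, rho)]) (Ext bs).
Proof.
  intros Nd Hin C. apply complies_intro.
  - do 2 eexists. eapply pt_sync; [constructor | apply st_ext; eauto | reflexivity].
  - intros r' s' Hp. inversion Hp as [| | ? ? ? ? a1 a2 H1 H2 Hd]; subst; invert_steps.
    simpl in Hd. subst. replace s' with x by (eapply NoDup_fst_In_eq; eauto). exact C.
Qed.

Lemma complies_Ext_Int cs bs : bs <> [] ->
  (forall l x, In (l, x) bs ->
     (exists rho, In (l, rho) cs) /\ forall rho, In (l, rho) cs -> complies B rho x) ->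
  complies B (Ext cs) (Int bs).
Proof.
  intros Hne Hc.
  assert (Single : forall l x, In (l, x) bs -> complies B (Ext cs) (Int [(l, x)])).
  { intros l x Hin. destruct (Hc l x Hin) as [(rho & Hrho) Hall]. apply complies_intro.
    - do 2 eexists. eapply pt_sync; [apply st_ext; eauto | constructor | reflexivity].
    - intros r' s' Hp. inversion Hp as [| | ? ? ? ? a1 a2 H1 H2 Hd]; subst; invert_steps.
      simpl in Hd. subst. auto. }
  destruct bs as [|[l x] [|q bs']]; [congruence | apply Single; left; auto|].
  apply complies_intro.
  - do 2 eexists. apply pt_right, st_int with (l := l) (s := x); simpl; auto. lia.
  - intros r' s' Hp. inversion Hp as [| ? ? ? H | ? ? ? ? a1 a2 H1 H2 Hd]; subst; invert_steps.
    now apply Single.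
Qed.

(* A client that neither moves internally nor offers an external choice must
   synchronise: an internal choice of the contract would leave it stuck. *)
Lemma complies_client_sync r u : complies B r u -> r <> One -> no_tau r ->
  (forall l r', ~ step r (AInL l) r') -> not_mu u ->
  exists a1 a2 r' u', step r a1 r' /\ step u a2 u' /\ dual B a1 a2 /\ complies B r' u'.
Proof.
  intros C N1 Nt Nl Nu. destruct (complies_progress _ _ _ C (or_introl N1)) as (r' & u' & Hp).
  pose proof (complies_par_tau _ _ _ _ _ C Hp) as C'.
  inversion Hp as [? ? ? H | ? ? ? H | ? ? ? ? a1 a2 H1 H2 Hd]; subst.
  - edestruct Nt; eauto.
  - exfalso. inversion H as [| | | | | | bs l s _ _ | | x s]; subst; [|edestruct Nu; eauto].
    destruct (complies_progress _ _ _ C' (or_introl N1)) as (r'' & u'' & Hp').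
    inversion Hp' as [? ? ? H' | ? ? ? H' | ? ? ? ? a1 a2 H1 H2 Hd]; subst;
      [edestruct Nt; eauto | invert_steps |].
    invert_steps. invert_dual Hd. subst. eapply Nl; eauto.
  - eauto 10.
Qed.

Lemma complies_One_inv u : complies B One u -> not_mu u -> u = One.
Proof.
  intros C Nu. apply NNPP. intros Hne.
  destruct (complies_progress _ _ _ C (or_intror Hne)) as (r' & u' & Hp).
  pose proof (complies_par_tau _ _ _ _ _ C Hp) as C'.
  inversion Hp as [? ? ? H | ? ? ? H | ? ? ? ? a1 a2 H1 H2 Hd]; subst; invert_steps.
  - inversion H as [| | | | | | bs l s _ _ | | x s]; subst; [|edestruct Nu; eauto].
    destruct (complies_stuck _ _ _ C') as [_ (? & Ht)].
    + intros r'' u'' Hp'. inversion Hp'; subst; invert_steps.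
    + inversion Ht.
Qed.

Lemma complies_OutT_inv t rho u : complies B (OutT t rho) u -> not_mu u ->
  exists t2 u', u = InT t2 u' /\ leb t t2 /\ complies B rho u'.
Proof.
  intros C Nu.
  destruct (complies_client_sync _ _ C) as (a1 & a2 & r' & u' & H1 & H2 & Hd & C');
    try discriminate; try no_tau_tac; auto; [intros ? ? H; inversion H|].
  invert_steps. invert_dual Hd. inversion H2; subst. eauto.
Qed.

Lemma complies_InT_inv t rho u : complies B (InT t rho) u -> not_mu u ->
  exists t2 u', u = OutT t2 u' /\ leb t2 t /\ complies B rho u'.
Proof.
  intros C Nu.
  destruct (complies_client_sync _ _ C) as (a1 & a2 & r' & u' & H1 & H2 & Hd & C');
    try discriminate; try no_tau_tac; auto; [intros ? ? H; inversion H|].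
  invert_steps. invert_dual Hd. inversion H2; subst. eauto.
Qed.

Lemma complies_InS_inv m rho u : complies B (InS m rho) u -> not_mu u ->
  exists m2 u', u = OutS m2 u' /\ B m2 m /\ complies B rho u'.
Proof.
  intros C Nu.
  destruct (complies_client_sync _ _ C) as (a1 & a2 & r' & u' & H1 & H2 & Hd & C');
    try discriminate; try no_tau_tac; auto; [intros ? ? H; inversion H|].
  invert_steps. invert_dual Hd. inversion H2; subst. eauto.
Qed.

Lemma complies_OutS_inv m rho u : complies B (OutS m rho) u -> not_mu u ->
  exists m2 u', u = InS m2 u' /\ B m m2 /\ complies B rho u'.
Proof.
  intros C Nu.
  destruct (complies_client_sync _ _ C) as (a1 & a2 & r' & u' & H1 & H2 & Hd & C');
    try discriminate; try no_tau_tac; auto; [intros ? ? H; inversion H|].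
  invert_steps. invert_dual Hd. inversion H2; subst. eauto.
Qed.

Lemma complies_Int_single_inv l rho u : complies B (Int [(l, rho)]) u -> not_mu u ->
  exists bs, u = Ext bs /\ (exists y, In (l, y) bs) /\
    forall y, In (l, y) bs -> complies B rho y.
Proof.
  intros C Nu.
  destruct (complies_client_sync _ _ C) as (a1 & a2 & r' & u' & H1 & H2 & Hd & C');
    try discriminate; try no_tau_tac; auto; [intros ? ? H; inversion H|].
  invert_steps. invert_dual Hd. subst. inversion H2 as [| | | | | | | bs ? ? Hin |]; subst.
  exists bs. split; [|split]; eauto. intros y Hy.
  eapply complies_par_tau; [exact C|]. eapply pt_sync; [constructor | apply st_ext, Hy | reflexivity].
Qed.

Lemma complies_Ext_Int_single cs l y : complies B (Ext cs) (Int [(l, y)]) ->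
  exists rho, In (l, rho) cs /\ complies B rho y.
Proof.
  intros C. assert (N : Ext cs <> One) by discriminate.
  destruct (complies_progress _ _ _ C (or_introl N)) as (r' & u' & Hp).
  pose proof (complies_par_tau _ _ _ _ _ C Hp) as C'.
  inversion Hp as [| | ? ? ? ? a1 a2 H1 H2 Hd]; subst; invert_steps. simpl in Hd. subst. eauto.
Qed.

Lemma complies_Ext_inv cs u : complies B (Ext cs) u -> not_mu u ->
  exists bs, u = Int bs /\
    forall l y, In (l, y) bs -> exists rho, In (l, rho) cs /\ complies B rho y.
Proof.
  intros C Nu.
  assert (exists bs, u = Int bs) as (bs & ->).
  { assert (N : Ext cs <> One) by discriminate.
    destruct (complies_progress _ _ _ C (or_introl N)) as (r' & u' & Hp).
    inversion Hp as [? ? ? H | ? ? ? H | ? ? ? ? a1 a2 H1 H2 Hd]; subst; invert_steps.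
    - inversion H; subst; eauto. edestruct Nu; eauto.
    - invert_dual Hd. subst. inversion H2; eauto. }
  exists bs. split; auto. intros l y Hin.
  apply complies_Ext_Int_single, (complies_Int_branch _ _ _ _ _ C Hin).
Qed.
End ClientShapes.

Section ClientInclusion.
Variable B : term -> term -> Prop.
Hypothesis B_refl : forall m, SC m -> B m m.
Hypothesis leb_refl : forall t, leb t t.

Let client_ok z (Hz : SC z) : complies B (client z) z := client_complies B B_refl leb_refl z Hz.

(* The client of an internal choice offers every label, replying to [l0] with the
   given [rho0] and to the other labels with canonical clients. *)
Lemma complies_Ext_client bs l0 x0 rho0 : SC (Int bs) -> In (l0, x0) bs ->
  SC rho0 -> complies B rho0 x0 ->
  exists cs, SC (Ext cs) /\ complies B (Ext cs) (Int bs) /\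
    map fst cs = map fst bs /\ In (l0, rho0) cs.
Proof.
  intros Hs Hin Sr Cr. pose proof Hs as (Hne & Hnd & Hsub)%SC_Int.
  destruct (in_split _ _ Hin) as (pre & post & ->).
  set (cs := map_branches client pre ++ (l0, rho0) :: map_branches client post).
  assert (Hfst : map fst cs = map fst (pre ++ (l0, x0) :: post)).
  { unfold cs. rewrite !map_app. simpl. now rewrite !map_fst_map_branches. }
  assert (Hmem : forall l r, In (l, r) cs -> (l = l0 /\ r = rho0) \/
                   exists x, In (l, x) (pre ++ (l0, x0) :: post) /\ r = client x).
  { intros l r Hr. apply in_app_or in Hr as [Hr | [E | Hr]].
    - apply in_map_branches in Hr as (x & Hx & ->). right. exists x. auto using in_or_app.
    - injection E as <- <-. auto.
    - apply in_map_branches in Hr as (x & Hx & ->). right. exists x.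
      split; auto. apply in_or_app. right; right; auto. }
  exists cs. split; [|split; [|split; auto]].
  - apply SC_Ext. split; [unfold cs; destruct (map_branches client pre); discriminate|].
    split; [now rewrite Hfst|].
    intros l t Ht. destruct (Hmem l t Ht) as [[_ ->] | (x & Hx & ->)]; auto.
    apply SC_client. eauto.
  - apply complies_Ext_Int; auto. intros l x Hx. split.
    + apply in_app_or in Hx as [Hx | [E | Hx]].
      * exists (client x). apply in_or_app. left. apply in_map_branches; eauto.
      * injection E as <- <-. exists rho0. apply in_or_app. right. left; auto.
      * exists (client x). apply in_or_app. right. right. apply in_map_branches; eauto.
    + intros r Hr. destruct (Hmem l r Hr) as [[-> ->] | (x' & Hx' & ->)].
      * now rewrite (NoDup_fst_In_eq _ _ _ _ Hnd Hx Hin).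
      * rewrite (NoDup_fst_In_eq _ _ _ _ Hnd Hx Hx'). apply client_ok. eauto.
  - unfold cs. apply in_or_app. right. left. auto.
Qed.

Lemma subB_One_inv u2 : subB B One u2 -> not_mu u2 -> u2 = One.
Proof.
  intros (_ & _ & Hcl) N2. apply (complies_One_inv B); auto.
  apply Hcl; [repeat split; auto; intros ? [] | apply (complies_One B)].
Qed.

Lemma subB_InT_inv t1 x u2 : subB B (InT t1 x) u2 -> not_mu u2 ->
  exists t2 y, u2 = InT t2 y /\ leb t1 t2 /\ subB B x y.
Proof.
  intros (S1 & S2 & Hcl) N2. apply SC_InT in S1.
  assert (K : forall rho, SC rho -> complies B rho x ->
            exists t2 y, u2 = InT t2 y /\ leb t1 t2 /\ complies B rho y).
  { intros rho Sr Cr. apply complies_OutT_inv; auto.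
    apply Hcl; [now apply <- SC_OutT | apply complies_OutT_InT; auto]. }
  destruct (K (client x)) as (t2 & y & -> & Ht & _); auto using SC_client.
  exists t2, y. split; [reflexivity|]. split; [exact Ht|].
  split; [exact S1|]. split; [now apply SC_InT in S2|].
  intros rho Sr Cr. destruct (K rho Sr Cr) as (? & ? & E & _ & C). now injection E as <- <-.
Qed.

Lemma subB_OutT_inv t1 x u2 : subB B (OutT t1 x) u2 -> not_mu u2 ->
  exists t2 y, u2 = OutT t2 y /\ leb t2 t1 /\ subB B x y.
Proof.
  intros (S1 & S2 & Hcl) N2. apply SC_OutT in S1.
  assert (K : forall rho, SC rho -> complies B rho x ->
            exists t2 y, u2 = OutT t2 y /\ leb t2 t1 /\ complies B rho y).
  { intros rho Sr Cr. apply complies_InT_inv; auto.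
    apply Hcl; [now apply <- SC_InT | apply complies_InT_OutT; auto]. }
  destruct (K (client x)) as (t2 & y & -> & Ht & _); auto using SC_client.
  exists t2, y. split; [reflexivity|]. split; [exact Ht|].
  split; [exact S1|]. split; [now apply SC_OutT in S2|].
  intros rho Sr Cr. destruct (K rho Sr Cr) as (? & ? & E & _ & C). now injection E as <- <-.
Qed.

Lemma subB_OutS_inv m1 x u2 : subB B (OutS m1 x) u2 -> not_mu u2 ->
  exists m2 y, u2 = OutS m2 y /\ B m2 m1 /\ subB B x y.
Proof.
  intros (S1 & S2 & Hcl) N2. apply SC_OutS in S1 as [Sm S1].
  assert (K : forall rho, SC rho -> complies B rho x ->
            exists m2 y, u2 = OutS m2 y /\ B m2 m1 /\ complies B rho y).
  { intros rho Sr Cr. apply complies_InS_inv; auto.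
    apply Hcl; [now apply SC_InS | apply complies_InS_OutS; auto]. }
  destruct (K (client x)) as (m2 & y & -> & Hm & _); auto using SC_client.
  exists m2, y. split; [reflexivity|]. split; [exact Hm|].
  split; [exact S1|]. split; [now apply SC_OutS in S2|].
  intros rho Sr Cr. destruct (K rho Sr Cr) as (? & ? & E & _ & C). now injection E as <- <-.
Qed.

Lemma subB_InS_inv m1 x u2 : subB B (InS m1 x) u2 -> not_mu u2 ->
  exists m2 y, u2 = InS m2 y /\ B m1 m2 /\ subB B x y.
Proof.
  intros (S1 & S2 & Hcl) N2. apply SC_InS in S1 as [Sm S1].
  assert (K : forall rho, SC rho -> complies B rho x ->
            exists m2 y, u2 = InS m2 y /\ B m1 m2 /\ complies B rho y).
  { intros rho Sr Cr. apply complies_OutS_inv; auto.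
    apply Hcl; [now apply SC_OutS | apply complies_OutS_InS; auto]. }
  destruct (K (client x)) as (m2 & y & -> & Hm & _); auto using SC_client.
  exists m2, y. split; [reflexivity|]. split; [exact Hm|].
  split; [exact S1|]. split; [now apply SC_InS in S2|].
  intros rho Sr Cr. destruct (K rho Sr Cr) as (? & ? & E & _ & C). now injection E as <- <-.
Qed.

Lemma subB_Ext_inv bs1 u2 : subB B (Ext bs1) u2 -> not_mu u2 ->
  exists bs2, u2 = Ext bs2 /\
    forall l x, In (l, x) bs1 -> exists y, In (l, y) bs2 /\ subB B x y.
Proof.
  intros (S1 & S2 & Hcl) N2. pose proof S1 as (Hne & Hnd & Hsub)%SC_Ext.
  assert (K : forall l x, In (l, x) bs1 -> forall rho, SC rho -> complies B rho x ->
            exists bs2, u2 = Ext bs2 /\ (exists y, In (l, y) bs2) /\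
              forall y, In (l, y) bs2 -> complies B rho y).
  { intros l x Hin rho Sr Cr. apply complies_Int_single_inv; auto.
    apply Hcl; [now apply SC_Int_single | eapply complies_Int_single_Ext; eauto]. }
  assert (Kc : forall l x, In (l, x) bs1 -> exists bs2, u2 = Ext bs2 /\ exists y, In (l, y) bs2).
  { intros l x Hin. assert (Sx : SC x) by eauto.
    destruct (K l x Hin (client x) (SC_client x Sx) (client_ok x Sx)) as (bs2 & ? & ? & _).
    eauto. }
  destruct bs1 as [|[l0 x0] bs1']; [congruence|].
  destruct (Kc l0 x0 (or_introl eq_refl)) as (bs2 & -> & _).
  exists bs2. split; auto. intros l x Hin.
  destruct (Kc l x Hin) as (bs3 & E & (y & Hy)). injection E as <-. exists y. split; auto. split; [eauto|]. split; [eapply SC_Ext_In; eauto|].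
  intros rho Sr Cr. destruct (K l x Hin rho Sr Cr) as (bs3 & E & _ & C).
  injection E as <-. auto.
Qed.

Lemma subB_Int_inv bs1 u2 : subB B (Int bs1) u2 -> not_mu u2 ->
  exists bs2, u2 = Int bs2 /\
    forall l y, In (l, y) bs2 -> exists x, In (l, x) bs1 /\ subB B x y.
Proof.
  intros (S1 & S2 & Hcl) N2. pose proof S1 as (Hne & Hnd & Hsub)%SC_Int.
  assert (K : forall l x, In (l, x) bs1 -> forall rho, SC rho -> complies B rho x ->
            exists cs bs2, map fst cs = map fst bs1 /\ In (l, rho) cs /\ NoDup (map fst cs) /\
              u2 = Int bs2 /\ forall l' y, In (l', y) bs2 ->
                exists rho', In (l', rho') cs /\ complies B rho' y).
  { intros l x Hin rho Sr Cr.
    destruct (complies_Ext_client bs1 l x rho) as (cs & Scs & Ccs & Hf & Hin'); auto.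
    destruct (complies_Ext_inv B cs u2) as (bs2 & E & Hb); auto.
    exists cs, bs2. rewrite Hf. auto. }
  destruct bs1 as [|[l0 x0] bs1']; [congruence|].
  assert (Sx0 : SC x0) by (apply (Hsub l0); left; auto).
  destruct (K l0 x0 (or_introl eq_refl) (client x0) (SC_client x0 Sx0) (client_ok x0 Sx0))
    as (cs0 & bs2 & Hf0 & _ & _ & -> & Hb0).
  exists bs2. split; auto. intros l y Hin. destruct (Hb0 l y Hin) as (r0 & Hr0 & _).
  assert (Hl : In l (map fst ((l0, x0) :: bs1'))) by (rewrite <- Hf0; apply in_map_iff; now exists (l, r0)).
  apply in_map_iff in Hl as ([? x] & <- & Hin1).
  exists x. split; auto. split; [eauto|]. split; [eapply SC_Int_In; eauto|].
  intros rho Sr Cr. destruct (K _ x Hin1 rho Sr Cr) as (cs & bs3 & _ & Hinr & Hndc & E & Hb).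
  injection E as <-. destruct (Hb _ y Hin) as (rho' & Hr' & C).
  now rewrite (NoDup_fst_In_eq _ _ _ _ Hndc Hinr Hr').
Qed.

Lemma subB_S_clause u1 u2 : subB B u1 u2 -> not_mu u1 -> not_mu u2 ->
  S_clause (subB B) B u1 u2.
Proof.
  intros H N1 N2. assert (U2 := unfolds_refl _ N2).
  destruct u1 as [| | | | |bs1|bs1|x s|x]; simpl.
  - now rewrite (subB_One_inv _ H N2) in U2 |- *.
  - destruct (subB_InT_inv _ _ _ H N2) as (t2 & y & -> & ? & ?). eauto 7.
  - destruct (subB_OutT_inv _ _ _ H N2) as (t2 & y & -> & ? & ?). eauto 7.
  - destruct (subB_OutS_inv _ _ _ H N2) as (m2 & y & -> & ? & ?). eauto 7.
  - destruct (subB_InS_inv _ _ _ H N2) as (m2 & y & -> & ? & ?). eauto 7.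
  - destruct (subB_Ext_inv _ _ H N2) as (bs2 & -> & ?). eauto.
  - destruct (subB_Int_inv _ _ H N2) as (bs2 & -> & ?). eauto.
  - eapply N1; eauto.
  - destruct H as [HV _]. exact (SC_Var x HV).
Qed.
End ClientInclusion.

Section Characterisation.
Hypothesis leb_preorder : PreOrder leb.
Local Notation preorder_on_SC := (@preorder_on_SC BT L).

Definition subB_post_fixed (x y : term) : Prop :=
  exists B, preorder_on_SC B /\ (forall a b, B a b -> subB B a b) /\ subB B x y.

Lemma subB_post_fixed_S x y : subB_post_fixed x y ->
  SC x /\ SC y /\ Sfun subB_post_fixed subB_post_fixed x y.
Proof.
  intros (B & HB & Hpost & Hxy). pose proof HB as (_ & B_refl & _).
  pose proof Hxy as (Sx & Sy & Hcl).
  do 2 (split; auto). intros u1 Hu1.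
  destruct (SC_unfolds_exists y Sy) as (u2 & Hu2).
  assert (Hsub : subB B u1 u2).
  { split; [eapply SC_unfolds; eauto|]. split; [eapply SC_unfolds; eauto|].
    intros r Sr Cr. eapply complies_unfolds; eauto.
    apply Hcl, (complies_unfolds_inv B x u1); auto. }
  pose proof (subB_S_clause B B_refl (PreOrder_Reflexive (R := leb)) u1 u2 Hsub
               (unfolds_not_mu _ _ Hu1) (unfolds_not_mu _ _ Hu2)) as HS.
  eapply S_clause_unfolds_r, S_clause_mono; [| | | exact HS].
  - intros X HX. now rewrite (unfolds_not_mu_eq _ _ (unfolds_not_mu _ _ Hu2) HX).
  - intros a b Hab. exists B. auto.
  - intros a b Hab. exists B. auto.
Qed.

Lemma peer_sub_nuS s1 s2 : peer_sub leb s1 s2 -> nuS s1 s2.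
Proof.
  intros (B & HB & Hpost & H12). apply (nuS_coind subB_post_fixed).
  - apply subB_post_fixed_S.
  - exists B. auto.
Qed.

Lemma nuS_peer_sub s1 s2 : nuS s1 s2 -> peer_sub leb s1 s2.
Proof.
  intros H12. exists nuS. split; [split; [|split] | split; auto].
  - intros x y Hxy. now destruct (nuS_post _ _ Hxy) as (? & ? & _).
  - now apply nuS_refl.
  - now apply nuS_trans.
  - intros x y Hxy. destruct (nuS_post _ _ Hxy) as (Sx & Sy & _).
    do 2 (split; auto). intros r _ Hr. eapply nuS_complies; eauto.
Qed.
End Characterisation.
End PeerSubcontract.

Theorem mainTheorem12 (BT L : Type) (leb : BT -> BT -> Prop)
  (Hleb : PreOrder leb) (s1 s2 : term BT L) :
  peer_sub leb s1 s2 <-> nuS leb s1 s2.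
Proof.
  split; [apply peer_sub_nuS | apply nuS_peer_sub]; exact Hleb.
Qed.
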